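(* In $\mathrm{F}_H$, if $\emptyset \vdash e : T$, then either $e \longrightarrow e'$ for some $e'$, or $e$ is a value, or $e = \Uparrow\ell$ for some blame label $\ell$.
   Context: Syntax of $\mathrm{F}_H$. Base types $B$ include $\mathsf{Bool}$; each $B$ has a set $\mathcal{K}_B$ of constants ($\mathcal{K}_{\mathsf{Bool}}=\{\mathsf{true},\mathsf{false}\}$). Primitive operations $\mathtt{op}$ have denotations $[\![\mathtt{op}]\!]$ (partial functions from tuples of constants to constants). Types $T ::= B \mid \alpha \mid x{:}T_1\to T_2 \mid \forall\alpha.T \mid \{x{:}T \mid e\}$; $T_1\to T_2$ abbreviates $x{:}T_1\to T_2$ with $x$ not free in $T_2$. Values $v ::= k \mid \lambda x{:}T.e \mid \Lambda\alpha.e \mid \langle T_1\Rightarrow T_2\rangle^{\ell}$. Terms $e ::= v \mid x \mid \mathtt{op}(e_1,\dots,e_n) \mid e_1\,e_2 \mid e\,T \mid \langle\!\langle \{x{:}T_1\mid e_1\}, e_2\rangle\!\rangle^{\ell} \mid \langle \{x{:}T_1\mid e_1\}, e_2, v\rangle^{\ell} \mid \Uparrow\ell$. Substitution is capture-avoiding; $\mathsf{let}\ y{:}T=e_1\ \mathsf{in}\ e_2$ means $(\lambda y{:}T.e_2)\,e_1$. Semantics. Reduction $\rightsquigarrow$: $\mathtt{op}(k_1,\dots,k_n)\rightsquigarrow[\![\mathtt{op}]\!](k_1,\dots,k_n)$; $(\lambda x{:}T.e)\,v\rightsquigarrow e[v/x]$; $(\Lambda\alpha.e)\,T\rightsquigarrow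 e[T/\alpha]$; $\langle B\Rightarrow B\rangle^\ell v\rightsquigarrow v$; $\langle x{:}T_{11}\to T_{12}\Rightarrow x{:}T_{21}\to T_{22}\rangle^\ell v\rightsquigarrow \lambda x{:}T_{21}.\,\mathsf{let}\ y{:}T_{11}=\langle T_{21}\Rightarrow T_{11}\rangle^\ell x\ \mathsf{in}\ \langle T_{12}[y/x]\Rightarrow T_{22}\rangle^\ell (v\,y)$ ($y$ fresh); $\langle\forall\alpha.T_1\Rightarrow\forall\alpha.T_2\rangle^\ell v\rightsquigarrow\Lambda\alpha.\langle T_1\Rightarrow T_2\rangle^\ell(v\,\alpha)$; $\langle\{x{:}T_1\mid e_1\}\Rightarrow T_2\rangle^\ell v\rightsquigarrow\langle T_1\Rightarrow T_2\rangle^\ell v$; $\langle T_1\Rightarrow\{x{:}T_2\mid e_2\}\rangle^\ell v\rightsquigarrow\langle\!\langle\{x{:}T_2\mid e_2\},\langle T_1\Rightarrow T_2\rangle^\ell v\rangle\!\rangle^\ell$ if $T_1$ is not a refinement type; $\langle\!\langle\{x{:}T\mid e\},v\rangle\!\rangle^\ell\rightsquigarrow\langle\{x{:}T\mid e\},e[v/x],v\rangle^\ell$; $\langle\{x{:}T\mid e\},\mathsf{true},v\rangle^\ell\rightsquigarrow v$; $\langle\{x{:}T\mid e\},\mathsf{false},v\rangle^\ell\rightsquigarrow\Uparrow\ell$. Evaluation contexts $E ::= [\,] \mid \mathtt{op}(v_1,\dots,v_n,E,e_1,\dots,e_m) \mid E\,e \mid v\,E \mid E\,T \mid \langle\!\langle\{x{:}T\mid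 e\},E\rangle\!\rangle^\ell \mid \langle\{x{:}T\mid e\},E,v\rangle^\ell$; $E[e_1]\longrightarrow E[e_2]$ if $e_1\rightsquigarrow e_2$, and $E[\Uparrow\ell]\longrightarrow\Uparrow\ell$ if $E\ne[\,]$; $\longrightarrow^*$ is its reflexive–transitive closure. Typing. Contexts $\Gamma ::= \emptyset \mid \Gamma,x{:}T \mid \Gamma,\alpha$ (distinct variables). Each constant has a type $\mathsf{ty}(k)$ and each operation a type $\mathsf{ty}(\mathtt{op})=x_1{:}T_1\to\dots\to x_n{:}T_n\to T_0$. Let $\mathit{unref}(\{x{:}T\mid e\})=\mathit{unref}(T)$ and $\mathit{unref}(T)=T$ otherwise. Assumed: for $k\in\mathcal{K}_B$, $\mathit{unref}(\mathsf{ty}(k))=B$, $\emptyset\vdash\mathsf{ty}(k)$ and $\langle B\Rightarrow\mathsf{ty}(k)\rangle^\ell k\longrightarrow^* k$; each $\mathit{unref}(T_i)$ ($0\le i\le n$) for $\mathsf{ty}(\mathtt{op})$ is a base type, and if $k_i\in\mathcal{K}_{\mathit{unref}(T_i)}$ with $\langle \mathit{unref}(T_i)\Rightarrow T_i[k_1/x_1,\dots,k_{i-1}/x_{i-1}]\rangle^\ell k_i\longrightarrow^* k_i$ for all $1\le i\le n$, then $[\![\mathtt{op}]\!](k_1,\dots,k_n)=k\in\mathcal{K}_{\mathit{unref}(T_0)}$ with $\langle\mathit{unref}(T_0)\Rightarrow T_0[k_1/x_1,\dots,k_n/x_n]\rangle^\ell k\longrightarrow^* k$, while $[\![\mathtt{op}]\!](k_1,\dots,k_n)$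 is undefined if some $k_i$ fails this condition. Well-formedness: $\vdash\emptyset$; $\vdash\Gamma,x{:}T$ if $\vdash\Gamma$, $\Gamma\vdash T$; $\vdash\Gamma,\alpha$ if $\vdash\Gamma$. $\Gamma\vdash B$ if $\vdash\Gamma$; $\Gamma\vdash\alpha$ if $\vdash\Gamma$, $\alpha\in\Gamma$; $\Gamma\vdash x{:}T_1\to T_2$ if $\Gamma\vdash T_1$ and $\Gamma,x{:}T_1\vdash T_2$; $\Gamma\vdash\forall\alpha.T$ if $\Gamma,\alpha\vdash T$; $\Gamma\vdash\{x{:}T\mid e\}$ if $\Gamma\vdash T$ and $\Gamma,x{:}T\vdash e:\mathsf{Bool}$. Compatibility $T_1\parallel T_2$: $B\parallel B$; $\alpha\parallel\alpha$; $\{x{:}T_1\mid e\}\parallel T_2$ and $T_1\parallel\{x{:}T_2\mid e\}$ if $T_1\parallel T_2$; $x{:}T_{11}\to T_{12}\parallel x{:}T_{21}\to T_{22}$ if $T_{11}\parallel T_{21}$ and $T_{12}\parallel T_{22}$; $\forall\alpha.T_1\parallel\forall\alpha.T_2$ if $T_1\parallel T_2$. Conversion: $T_1\Rrightarrow T_2$ if $T_1=T[e_1/x]$, $T_2=T[e_2/x]$ and $e_1\longrightarrow e_2$ for some $T,x,e_1,e_2$; $\equiv$ is the symmetric transitive closure of $\Rrightarrow$. Typing rules: $\Gamma\vdash x:T$ if $\vdash\Gamma$, $x{:}T\in\Gamma$; $\Gamma\vdash k:\mathsf{ty}(k)$ if $\vdash\Gamma$; $\Gamma\vdash\mathtt{op}(e_1,\dots,e_n):T_0[e_1/x_1,\dots,e_n/x_n]$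 if $\vdash\Gamma$, $\mathsf{ty}(\mathtt{op})=x_1{:}T_1\to\dots\to x_n{:}T_n\to T_0$ and $\Gamma\vdash e_i:T_i[e_1/x_1,\dots,e_{i-1}/x_{i-1}]$ for all $i$; $\Gamma\vdash\lambda x{:}T_1.e:x{:}T_1\to T_2$ if $\Gamma,x{:}T_1\vdash e:T_2$; $\Gamma\vdash\langle T_1\Rightarrow T_2\rangle^\ell:T_1\to T_2$ if $\Gamma\vdash T_1$, $\Gamma\vdash T_2$, $T_1\parallel T_2$; $\Gamma\vdash e_1\,e_2:T_2[e_2/x]$ if $\Gamma\vdash e_1:x{:}T_1\to T_2$, $\Gamma\vdash e_2:T_1$, $\Gamma\vdash T_2[e_2/x]$; $\Gamma\vdash\Lambda\alpha.e:\forall\alpha.T$ if $\Gamma,\alpha\vdash e:T$; $\Gamma\vdash e\,T_2:T_1[T_2/\alpha]$ if $\Gamma\vdash e:\forall\alpha.T_1$, $\Gamma\vdash T_2$; $\Gamma\vdash\langle\!\langle\{x{:}T_1\mid e_1\},e_2\rangle\!\rangle^\ell:\{x{:}T_1\mid e_1\}$ if $\Gamma\vdash\{x{:}T_1\mid e_1\}$, $\Gamma\vdash e_2:T_1$; $\Gamma\vdash\langle\{x{:}T_1\mid e_1\},e_2,v\rangle^\ell:\{x{:}T_1\mid e_1\}$ if $\vdash\Gamma$, $\emptyset\vdash\{x{:}T_1\mid e_1\}$, $\emptyset\vdash v:T_1$, $\emptyset\vdash e_2:\mathsf{Bool}$, $e_1[v/x]\longrightarrow^* e_2$; $\Gamma\vdash\Uparrow\ell:T$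 if $\vdash\Gamma$, $\emptyset\vdash T$; $\Gamma\vdash e:T_2$ if $\vdash\Gamma$, $\emptyset\vdash e:T_1$, $\emptyset\vdash T_2$, $T_1\equiv T_2$; $\Gamma\vdash v:T$ if $\vdash\Gamma$, $\emptyset\vdash v:\{x{:}T\mid e\}$; $\Gamma\vdash v:\{x{:}T\mid e\}$ if $\vdash\Gamma$, $\emptyset\vdash v:T$, $\emptyset\vdash\{x{:}T\mid e\}$, $e[v/x]\longrightarrow^*\mathsf{true}$. *)

(* Binders are represented with de Bruijn indices, with two separate index
   spaces: term variables (x) and type variables (alpha).  Term binders:
   the body of a lambda, the codomain of a dependent arrow x:T1 -> T2, and
   the predicate of a refinement {x:T | e} (also inside the waiting /
   active check forms).  Type binders: Lambda alpha. e and forall alpha. T. *)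
From Stdlib Require Import List Arith Relations.
Import ListNotations.

Definition label := nat.

(* The parameters of the calculus that do not mention types:
   base types B (with a distinguished base type Bool), constants (each
   constant k belongs to K_{kbase k}), the constants true/false, primitive
   operations and their (partial) denotations on tuples of constants. *)
Record sig := MkSig {
  sB : Type;
  sK : Type;
  sO : Type;
  sBool : sB;
  strue : sK;
  sfalse : sK;
  kbase : sK -> sB;     (* k \in K_B  iff  kbase k = B *)
  denot : sO -> list sK -> option sK
}.

Section Syntax.
Context (Sg : sig).

Inductive ty : Type :=
  | TBase (b : sB Sg)
  | TVar (a : nat)
  | TFun (T1 T2 : ty)               (* x:T1 -> T2, x bound in T2 *)
  | TAll (T : ty)
  | TRef (T : ty) (e : tm)          (* {x:T | e}, x bound in e *)
with val : Type :=
  | VConst (k : sK Sg)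
  | VAbs (T : ty) (e : tm)
  | VTAbs (e : tm)
  | VCast (T1 T2 : ty) (l : label)
with tm : Type :=
  | Val (v : val)
  | Var (x : nat)
  | Op (o : sO Sg) (es : list tm)
  | App (e1 e2 : tm)
  | TApp (e : tm) (T : ty)
  | Wait (T1 : ty) (e1 e2 : tm) (l : label)
      (* <<{x:T1 | e1}, e2>>^l, x bound in e1 *)
  | Active (T1 : ty) (e1 e2 : tm) (v : val) (l : label)
      (* <{x:T1 | e1}, e2, v>^l, x bound in e1 *)
  | Blame (l : label).

Fixpoint lift_e_ty (c : nat) (T : ty) : ty :=
  match T with
  | TBase b => TBase b
  | TVar a => TVar a
  | TFun T1 T2 => TFun (lift_e_ty c T1) (lift_e_ty (S c) T2)
  | TAll T' => TAll (lift_e_ty c T')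
  | TRef T' e => TRef (lift_e_ty c T') (lift_e_tm (S c) e)
  end
with lift_e_val (c : nat) (v : val) : val :=
  match v with
  | VConst k => VConst k
  | VAbs T e => VAbs (lift_e_ty c T) (lift_e_tm (S c) e)
  | VTAbs e => VTAbs (lift_e_tm c e)
  | VCast T1 T2 l => VCast (lift_e_ty c T1) (lift_e_ty c T2) l
  end
with lift_e_tm (c : nat) (e : tm) : tm :=
  match e with
  | Val v => Val (lift_e_val c v)
  | Var x => Var (if x <? c then x else S x)
  | Op o es => Op o (map (lift_e_tm c) es)
  | App e1 e2 => App (lift_e_tm c e1) (lift_e_tm c e2)
  | TApp e1 T => TApp (lift_e_tm c e1) (lift_e_ty c T)
  | Wait T1 e1 e2 l => Wait (lift_e_ty c T1) (lift_e_tm (S c) e1) (lift_e_tm c e2) l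
  | Active T1 e1 e2 v l =>
      Active (lift_e_ty c T1) (lift_e_tm (S c) e1) (lift_e_tm c e2) (lift_e_val c v) l
  | Blame l => Blame l
  end.

Fixpoint lift_t_ty (c : nat) (T : ty) : ty :=
  match T with
  | TBase b => TBase b
  | TVar a => TVar (if a <? c then a else S a)
  | TFun T1 T2 => TFun (lift_t_ty c T1) (lift_t_ty c T2)
  | TAll T' => TAll (lift_t_ty (S c) T')
  | TRef T' e => TRef (lift_t_ty c T') (lift_t_tm c e)
  end
with lift_t_val (c : nat) (v : val) : val :=
  match v with
  | VConst k => VConst k
  | VAbs T e => VAbs (lift_t_ty c T) (lift_t_tm c e)
  | VTAbs e => VTAbs (lift_t_tm (S c) e)
  | VCast T1 T2 l => VCast (lift_t_ty c T1) (lift_t_ty c T2) l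
  end
with lift_t_tm (c : nat) (e : tm) : tm :=
  match e with
  | Val v => Val (lift_t_val c v)
  | Var x => Var x
  | Op o es => Op o (map (lift_t_tm c) es)
  | App e1 e2 => App (lift_t_tm c e1) (lift_t_tm c e2)
  | TApp e1 T => TApp (lift_t_tm c e1) (lift_t_ty c T)
  | Wait T1 e1 e2 l => Wait (lift_t_ty c T1) (lift_t_tm c e1) (lift_t_tm c e2) l
  | Active T1 e1 e2 v l =>
      Active (lift_t_ty c T1) (lift_t_tm c e1) (lift_t_tm c e2) (lift_t_val c v) l
  | Blame l => Blame l
  end.

(* e[u/x] where x is term index k: replaces index k by u, and decrements
   term indices > k (the binder of x disappears). *)
Fixpoint subst_e_ty (k : nat) (u : tm) (T : ty) : ty :=
  match T with
  | TBase b => TBase b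
  | TVar a => TVar a
  | TFun T1 T2 => TFun (subst_e_ty k u T1) (subst_e_ty (S k) (lift_e_tm 0 u) T2)
  | TAll T' => TAll (subst_e_ty k (lift_t_tm 0 u) T')
  | TRef T' e => TRef (subst_e_ty k u T') (subst_e_tm (S k) (lift_e_tm 0 u) e)
  end
with subst_e_val (k : nat) (u : tm) (v : val) : val :=
  match v with
  | VConst c => VConst c
  | VAbs T e => VAbs (subst_e_ty k u T) (subst_e_tm (S k) (lift_e_tm 0 u) e)
  | VTAbs e => VTAbs (subst_e_tm k (lift_t_tm 0 u) e)
  | VCast T1 T2 l => VCast (subst_e_ty k u T1) (subst_e_ty k u T2) l
  end
with subst_e_tm (k : nat) (u : tm) (e : tm) : tm :=
  match e with
  | Val v => Val (subst_e_val k u v)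
  | Var x =>
      match Nat.compare x k with
      | Eq => u
      | Lt => Var x
      | Gt => Var (pred x)
      end
  | Op o es => Op o (map (subst_e_tm k u) es)
  | App e1 e2 => App (subst_e_tm k u e1) (subst_e_tm k u e2)
  | TApp e1 T => TApp (subst_e_tm k u e1) (subst_e_ty k u T)
  | Wait T1 e1 e2 l =>
      Wait (subst_e_ty k u T1) (subst_e_tm (S k) (lift_e_tm 0 u) e1) (subst_e_tm k u e2) l
  | Active T1 e1 e2 v l =>
      Active (subst_e_ty k u T1) (subst_e_tm (S k) (lift_e_tm 0 u) e1)
             (subst_e_tm k u e2) (subst_e_val k u v) l
  | Blame l => Blame l
  end.

Fixpoint subst_t_ty (k : nat) (U : ty) (T : ty) : ty :=
  match T with
  | TBase b => TBase b
  | TVar a =>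
      match Nat.compare a k with
      | Eq => U
      | Lt => TVar a
      | Gt => TVar (pred a)
      end
  | TFun T1 T2 => TFun (subst_t_ty k U T1) (subst_t_ty k (lift_e_ty 0 U) T2)
  | TAll T' => TAll (subst_t_ty (S k) (lift_t_ty 0 U) T')
  | TRef T' e => TRef (subst_t_ty k U T') (subst_t_tm k (lift_e_ty 0 U) e)
  end
with subst_t_val (k : nat) (U : ty) (v : val) : val :=
  match v with
  | VConst c => VConst c
  | VAbs T e => VAbs (subst_t_ty k U T) (subst_t_tm k (lift_e_ty 0 U) e)
  | VTAbs e => VTAbs (subst_t_tm (S k) (lift_t_ty 0 U) e)
  | VCast T1 T2 l => VCast (subst_t_ty k U T1) (subst_t_ty k U T2) l
  end
with subst_t_tm (k : nat) (U : ty) (e : tm) : tm :=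
  match e with
  | Val v => Val (subst_t_val k U v)
  | Var x => Var x
  | Op o es => Op o (map (subst_t_tm k U) es)
  | App e1 e2 => App (subst_t_tm k U e1) (subst_t_tm k U e2)
  | TApp e1 T => TApp (subst_t_tm k U e1) (subst_t_ty k U T)
  | Wait T1 e1 e2 l =>
      Wait (subst_t_ty k U T1) (subst_t_tm k (lift_e_ty 0 U) e1) (subst_t_tm k U e2) l
  | Active T1 e1 e2 v l =>
      Active (subst_t_ty k U T1) (subst_t_tm k (lift_e_ty 0 U) e1)
             (subst_t_tm k U e2) (subst_t_val k U v) l
  | Blame l => Blame l
  end.

Definition is_value (e : tm) : Prop := exists v, e = Val v.

Definition is_refinement (T : ty) : Prop :=
  match T with TRef _ _ => True | _ => False end.

Fixpoint unref (T : ty) : ty :=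
  match T with TRef T' _ => unref T' | _ => T end.

Definition const (k : sK Sg) : tm := Val (VConst k).
Definition ttrue : tm := const (strue Sg).
Definition tfalse : tm := const (sfalse Sg).
Definition TBool : ty := TBase (sBool Sg).

Inductive red : tm -> tm -> Prop :=
  | R_Op o ks k :
      denot Sg o ks = Some k ->
      red (Op o (map const ks)) (const k)
  | R_Beta T e v :
      red (App (Val (VAbs T e)) (Val v)) (subst_e_tm 0 (Val v) e)
  | R_TBeta e T :
      red (TApp (Val (VTAbs e)) T) (subst_t_tm 0 T e)
  | R_CastBase b l v :
      red (App (Val (VCast (TBase b) (TBase b) l)) (Val v)) (Val v)
  | R_CastFun T11 T12 T21 T22 l v :
      (* lambda x:T21. let y:T11 = <T21 => T11>^l x in <T12[y/x] => T22>^l (v y);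
         inside the body, y is index 0 and x is index 1 *)
      red (App (Val (VCast (TFun T11 T12) (TFun T21 T22) l)) (Val v))
          (Val (VAbs T21
             (App (Val (VAbs (lift_e_ty 0 T11)
                     (App (Val (VCast (lift_e_ty 1 T12) (lift_e_ty 0 T22) l))
                          (App (Val (lift_e_val 0 (lift_e_val 0 v))) (Var 0)))))
                  (App (Val (VCast (lift_e_ty 0 T21) (lift_e_ty 0 T11) l)) (Var 0)))))
  | R_CastAll T1 T2 l v :
      red (App (Val (VCast (TAll T1) (TAll T2) l)) (Val v))
          (Val (VTAbs (App (Val (VCast T1 T2 l)) (TApp (Val (lift_t_val 0 v)) (TVar 0)))))
  | R_Forget T1 e1 T2 l v :
      red (App (Val (VCast (TRef T1 e1) T2 l)) (Val v)) (App (Val (VCast T1 T2 l)) (Val v))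
  | R_PreCheck T1 T2 e2 l v :
      ~ is_refinement T1 ->
      red (App (Val (VCast T1 (TRef T2 e2) l)) (Val v))
          (Wait T2 e2 (App (Val (VCast T1 T2 l)) (Val v)) l)
  | R_Check T e v l :
      red (Wait T e (Val v) l) (Active T e (subst_e_tm 0 (Val v) e) v l)
  | R_OK T e v l :
      red (Active T e ttrue v l) (Val v)
  | R_Fail T e v l :
      red (Active T e tfalse v l) (Blame l).

Inductive ectx : Type :=
  | EHole
  | EOp (o : sO Sg) (vs : list val) (E : ectx) (es : list tm)
  | EApp1 (E : ectx) (e : tm)
  | EApp2 (v : val) (E : ectx)
  | ETApp (E : ectx) (T : ty)
  | EWait (T : ty) (e : tm) (E : ectx) (l : label)
  | EActive (T : ty) (e : tm) (E : ectx) (v : val) (l : label).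

Fixpoint plug (E : ectx) (e : tm) : tm :=
  match E with
  | EHole => e
  | EOp o vs E' es => Op o (map Val vs ++ plug E' e :: es)
  | EApp1 E' e2 => App (plug E' e) e2
  | EApp2 v E' => App (Val v) (plug E' e)
  | ETApp E' T => TApp (plug E' e) T
  | EWait T e1 E' l => Wait T e1 (plug E' e) l
  | EActive T e1 E' v l => Active T e1 (plug E' e) v l
  end.

Inductive step : tm -> tm -> Prop :=
  | S_Ctx E e1 e2 : red e1 e2 -> step (plug E e1) (plug E e2)
  | S_Blame E l : E <> EHole -> step (plug E (Blame l)) (Blame l).

Definition multistep : tm -> tm -> Prop := clos_refl_trans_1n tm step.

Inductive compat : ty -> ty -> Prop :=
  | C_Base b : compat (TBase b) (TBase b)
  | C_Var a : compat (TVar a) (TVar a)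
  | C_RefL T1 e T2 : compat T1 T2 -> compat (TRef T1 e) T2
  | C_RefR T1 T2 e : compat T1 T2 -> compat T1 (TRef T2 e)
  | C_Fun T11 T12 T21 T22 :
      compat T11 T21 -> compat T12 T22 -> compat (TFun T11 T12) (TFun T21 T22)
  | C_All T1 T2 : compat T1 T2 -> compat (TAll T1) (TAll T2).

Definition conv1 (T1 T2 : ty) : Prop :=
  exists T e1 e2, T1 = subst_e_ty 0 e1 T /\ T2 = subst_e_ty 0 e2 T /\ step e1 e2.

Definition equiv : ty -> ty -> Prop :=
  clos_trans ty (fun A B => conv1 A B \/ conv1 B A).

(* A context is a list of entries, the most recent binding at the head. *)
Inductive entry : Type :=
  | ETm (T : ty)
  | ETy.

Definition ctx := list entry.

(* the type of term variable with index n in Gamma, shifted into Gamma *)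
Fixpoint lookup_tm (G : ctx) (n : nat) : option ty :=
  match G with
  | [] => None
  | ETm T :: G' =>
      match n with
      | 0 => Some (lift_e_ty 0 T)
      | S m => option_map (lift_e_ty 0) (lookup_tm G' m)
      end
  | ETy :: G' => option_map (lift_t_ty 0) (lookup_tm G' n)
  end.

Fixpoint tvar_in (G : ctx) (n : nat) : Prop :=
  match G with
  | [] => False
  | ETm _ :: G' => tvar_in G' n
  | ETy :: G' => match n with 0 => True | S m => tvar_in G' m end
  end.

Fixpoint arity (T : ty) : nat :=
  match T with TFun _ T2 => S (arity T2) | _ => 0 end.

End Syntax.

Arguments TBase {Sg} b.
Arguments TVar {Sg} a.
Arguments TFun {Sg} T1 T2.
Arguments TAll {Sg} T.
Arguments TRef {Sg} T e.
Arguments VConst {Sg} k.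
Arguments VAbs {Sg} T e.
Arguments VTAbs {Sg} e.
Arguments VCast {Sg} T1 T2 l.
Arguments Val {Sg} v.
Arguments Var {Sg} x.
Arguments Op {Sg} o es.
Arguments App {Sg} e1 e2.
Arguments TApp {Sg} e T.
Arguments Wait {Sg} T1 e1 e2 l.
Arguments Active {Sg} T1 e1 e2 v l.
Arguments Blame {Sg} l.
Arguments ETm {Sg} T.
Arguments ETy {Sg}.

Record tysig (Sg : sig) := MkTySig {
  ty_const : sK Sg -> ty Sg;
  ty_op : sO Sg -> ty Sg       (* ty(op) = x1:T1 -> ... -> xn:Tn -> T0 *)
}.
Arguments ty_const {Sg} t k.
Arguments ty_op {Sg} t o.

Section Typing.
Context (Sg : sig) (Sig : tysig Sg).

Inductive wf_ctx : ctx Sg -> Prop :=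
  | WF_Nil : wf_ctx []
  | WF_Tm G T : wf_ctx G -> wf_ty G T -> wf_ctx (ETm T :: G)
  | WF_Ty G : wf_ctx G -> wf_ctx (ETy :: G)
with wf_ty : ctx Sg -> ty Sg -> Prop :=
  | WT_Base G b : wf_ctx G -> wf_ty G (TBase b)
  | WT_Var G a : wf_ctx G -> tvar_in Sg G a -> wf_ty G (TVar a)
  | WT_Fun G T1 T2 : wf_ty G T1 -> wf_ty (ETm T1 :: G) T2 -> wf_ty G (TFun T1 T2)
  | WT_All G T : wf_ty (ETy :: G) T -> wf_ty G (TAll T)
  | WT_Ref G T e : wf_ty G T -> typing (ETm T :: G) e (TBool Sg) -> wf_ty G (TRef T e)
with typing : ctx Sg -> tm Sg -> ty Sg -> Prop :=
  | T_Var G x T : wf_ctx G -> lookup_tm Sg G x = Some T -> typing G (Var x) T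
  | T_Const G k : wf_ctx G -> typing G (Val (VConst k)) (ty_const Sig k)
  | T_Op G o es R :
      wf_ctx G ->
      length es = arity Sg (ty_op Sig o) ->
      args_typed G (ty_op Sig o) es R ->
      typing G (Op o es) R
  | T_Abs G T1 e T2 : typing (ETm T1 :: G) e T2 -> typing G (Val (VAbs T1 e)) (TFun T1 T2)
  | T_Cast G T1 T2 l :
      wf_ty G T1 -> wf_ty G T2 -> compat Sg T1 T2 ->
      (* T1 -> T2 is x:T1 -> T2 with x not free in T2, hence the shift *)
      typing G (Val (VCast T1 T2 l)) (TFun T1 (lift_e_ty Sg 0 T2))
  | T_App G e1 e2 T1 T2 :
      typing G e1 (TFun T1 T2) -> typing G e2 T1 -> wf_ty G (subst_e_ty Sg 0 e2 T2) ->
      typing G (App e1 e2) (subst_e_ty Sg 0 e2 T2)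
  | T_TAbs G e T : typing (ETy :: G) e T -> typing G (Val (VTAbs e)) (TAll T)
  | T_TApp G e T1 T2 :
      typing G e (TAll T1) -> wf_ty G T2 -> typing G (TApp e T2) (subst_t_ty Sg 0 T2 T1)
  | T_Wait G T1 e1 e2 l :
      wf_ty G (TRef T1 e1) -> typing G e2 T1 -> typing G (Wait T1 e1 e2 l) (TRef T1 e1)
  | T_Active G T1 e1 e2 v l :
      wf_ctx G -> wf_ty [] (TRef T1 e1) -> typing [] (Val v) T1 ->
      typing [] e2 (TBool Sg) -> multistep Sg (subst_e_tm Sg 0 (Val v) e1) e2 ->
      typing G (Active T1 e1 e2 v l) (TRef T1 e1)
  | T_Blame G T l : wf_ctx G -> wf_ty [] T -> typing G (Blame l) T
  | T_Conv G e T1 T2 :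
      wf_ctx G -> typing [] e T1 -> wf_ty [] T2 -> equiv Sg T1 T2 -> typing G e T2
  | T_Forget G v T e :
      wf_ctx G -> typing [] (Val v) (TRef T e) -> typing G (Val v) T
  | T_Exact G v T e :
      wf_ctx G -> typing [] (Val v) T -> wf_ty [] (TRef T e) ->
      multistep Sg (subst_e_tm Sg 0 (Val v) e) (ttrue Sg) ->
      typing G (Val v) (TRef T e)
(* args_typed G T es R: with T = x1:T1 -> ... -> xn:Tn -> T0 and es = e1..en,
   each ei : Ti[e1/x1,...,e(i-1)/x(i-1)] and R = T0[e1/x1,...,en/xn] *)
with args_typed : ctx Sg -> ty Sg -> list (tm Sg) -> ty Sg -> Prop :=
  | AT_Nil G T : args_typed G T [] T
  | AT_Cons G e es T1 T2 R :
      typing G e T1 -> args_typed G (subst_e_ty Sg 0 e T2) es R ->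
      args_typed G (TFun T1 T2) (e :: es) R.

End Typing.

Section Assumptions.
Context (Sg : sig) (Sig : tysig Sg).

Definition is_base (T : ty Sg) : Prop := exists b, T = TBase b.

Definition const_ok (l : label) (T : ty Sg) (k : sK Sg) : Prop :=
  unref Sg T = TBase (kbase Sg k) /\
  multistep Sg (App (Val (VCast (unref Sg T) T l)) (const Sg k)) (const Sg k).

Fixpoint op_shape (T : ty Sg) : Prop :=
  match T with
  | TFun T1 T2 => is_base (unref Sg T1) /\ op_shape T2
  | _ => is_base (unref Sg T)
  end.

Fixpoint op_args_ok (l : label) (T : ty Sg) (ks : list (sK Sg)) : Prop :=
  match ks with
  | [] => True
  | k :: ks' =>
      match T with
      | TFun T1 T2 => const_ok l T1 k /\ op_args_ok l (subst_e_ty Sg 0 (const Sg k) T2) ks'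
      | _ => False
      end
  end.

Fixpoint op_result (T : ty Sg) (ks : list (sK Sg)) : ty Sg :=
  match ks with
  | [] => T
  | k :: ks' =>
      match T with
      | TFun _ T2 => op_result (subst_e_ty Sg 0 (const Sg k) T2) ks'
      | _ => T
      end
  end.

Definition FH_assumptions : Prop :=
  kbase Sg (strue Sg) = sBool Sg /\ kbase Sg (sfalse Sg) = sBool Sg /\
  strue Sg <> sfalse Sg /\
  (forall k, kbase Sg k = sBool Sg -> k = strue Sg \/ k = sfalse Sg) /\
  (forall k,
     unref Sg (ty_const Sig k) = TBase (kbase Sg k) /\
     wf_ty Sg Sig [] (ty_const Sig k) /\
     forall l, multistep Sg (App (Val (VCast (TBase (kbase Sg k)) (ty_const Sig k) l))
                                 (const Sg k)) (const Sg k)) /\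
  (forall o,
     op_shape (ty_op Sig o) /\
     forall l (ks : list (sK Sg)),
       length ks = arity Sg (ty_op Sig o) ->
       (op_args_ok l (ty_op Sig o) ks ->
          exists k, denot Sg o ks = Some k /\ const_ok l (op_result (ty_op Sig o) ks) k) /\
       (~ op_args_ok l (ty_op Sig o) ks -> denot Sg o ks = None)).

End Assumptions.

(** Progress follows from canonical forms by case analysis on the typing
    derivation.  The delicate point is that canonical forms must survive the
    conversion rule, i.e. a step [e1 --> e2] inside a type [T[e1/x]].
    Substituting terms never changes the head constructor of a type, so what
    must be shown is that a refinement predicate [p[e1/x][v/y]] evaluates to
    [true] exactly when [p[e2/x][v/y]] does.  This is cotermination:
    evaluation is deterministic and commutes with evaluating subterms anywhere
    in a term, even under binders, as long as those inner steps survive the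
    substitutions that evaluation later performs on them. *)

From Pilot Require Import Defs.
From Stdlib Require Import List Arith Lia Relations.
Import ListNotations.

Arguments Nat.compare : simpl never.
Arguments Nat.ltb : simpl never.

Section SyntaxInd.
Context (Sg : sig) (Pt : ty Sg -> Prop) (Pv : val Sg -> Prop) (Pe : tm Sg -> Prop).
Hypothesis HBase : forall b, Pt (TBase b).
Hypothesis HTVar : forall a, Pt (TVar a).
Hypothesis HFun : forall T1 T2, Pt T1 -> Pt T2 -> Pt (TFun T1 T2).
Hypothesis HAll : forall T, Pt T -> Pt (TAll T).
Hypothesis HRef : forall T e, Pt T -> Pe e -> Pt (TRef T e).
Hypothesis HConst : forall k, Pv (VConst k).
Hypothesis HAbs : forall T e, Pt T -> Pe e -> Pv (VAbs T e).
Hypothesis HTAbs : forall e, Pe e -> Pv (VTAbs e).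
Hypothesis HCast : forall T1 T2 l, Pt T1 -> Pt T2 -> Pv (VCast T1 T2 l).
Hypothesis HVal : forall v, Pv v -> Pe (Val v).
Hypothesis HVar : forall x, Pe (Var x).
Hypothesis HOp : forall o es, Forall Pe es -> Pe (Op o es).
Hypothesis HApp : forall e1 e2, Pe e1 -> Pe e2 -> Pe (App e1 e2).
Hypothesis HTApp : forall e T, Pe e -> Pt T -> Pe (TApp e T).
Hypothesis HWait : forall T e1 e2 l, Pt T -> Pe e1 -> Pe e2 -> Pe (Wait T e1 e2 l).
Hypothesis HActive :
  forall T e1 e2 v l, Pt T -> Pe e1 -> Pe e2 -> Pv v -> Pe (Active T e1 e2 v l).
Hypothesis HBlame : forall l, Pe (Blame l).

Fixpoint ty_syntax_ind (T : ty Sg) : Pt T :=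
  match T with
  | TBase b => HBase b
  | TVar a => HTVar a
  | TFun T1 T2 => HFun T1 T2 (ty_syntax_ind T1) (ty_syntax_ind T2)
  | TAll T => HAll T (ty_syntax_ind T)
  | TRef T e => HRef T e (ty_syntax_ind T) (tm_syntax_ind e)
  end
with val_syntax_ind (v : val Sg) : Pv v :=
  match v with
  | VConst k => HConst k
  | VAbs T e => HAbs T e (ty_syntax_ind T) (tm_syntax_ind e)
  | VTAbs e => HTAbs e (tm_syntax_ind e)
  | VCast T1 T2 l => HCast T1 T2 l (ty_syntax_ind T1) (ty_syntax_ind T2)
  end
with tm_syntax_ind (e : tm Sg) : Pe e :=
  match e with
  | Val v => HVal v (val_syntax_ind v)
  | Var x => HVar x
  | Op o es => HOp o es ((fix args (es : list (tm Sg)) : Forall Pe es :=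
                 match es with
                 | [] => Forall_nil _
                 | e :: es' => Forall_cons _ (tm_syntax_ind e) (args es')
                 end) es)
  | App e1 e2 => HApp e1 e2 (tm_syntax_ind e1) (tm_syntax_ind e2)
  | TApp e T => HTApp e T (tm_syntax_ind e) (ty_syntax_ind T)
  | Wait T e1 e2 l => HWait T e1 e2 l (ty_syntax_ind T) (tm_syntax_ind e1) (tm_syntax_ind e2)
  | Active T e1 e2 v l =>
      HActive T e1 e2 v l (ty_syntax_ind T) (tm_syntax_ind e1) (tm_syntax_ind e2)
        (val_syntax_ind v)
  | Blame l => HBlame l
  end.

Lemma syntax_ind : (forall T, Pt T) /\ (forall v, Pv v) /\ (forall e, Pe e).
Proof. exact (conj ty_syntax_ind (conj val_syntax_ind tm_syntax_ind)). Qed.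

End SyntaxInd.

Ltac syntax_induction :=
  match goal with
  | |- (forall T, @?Pt T) /\ (forall v, @?Pv v) /\ (forall e, @?Pe e) =>
      apply (syntax_ind _ Pt Pv Pe); intros; simpl; try solve [f_equal; auto]
  end.

Ltac index_arith := repeat (simpl in *; match goal with
  | |- context [?a <? ?b] => destruct (Nat.ltb_spec a b)
  | |- context [Nat.compare ?a ?b] => destruct (Nat.compare_spec a b)
  end); simpl in *; try lia; try reflexivity; try (f_equal; lia).

Lemma map_injective {A B} (f : A -> B) (l1 l2 : list A) :
  (forall a b, f a = f b -> a = b) -> map f l1 = map f l2 -> l1 = l2.
Proof.
  intros Hf; revert l2; induction l1; intros [|b l2]; simpl; intros H; inversion H; auto.
  f_equal; auto.
Qed.

Ltac map_case := rewrite ?map_map; apply map_ext_Forall;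
  eapply Forall_impl; [|eassumption]; simpl; intros; eauto.
Ltac args_case := f_equal; map_case.

Section LiftSubst.
Context (Sg : sig).
Notation Le_ty := (lift_e_ty Sg).
Notation Le_val := (lift_e_val Sg).
Notation Le := (lift_e_tm Sg).
Notation Lt_ty := (lift_t_ty Sg).
Notation Lt_val := (lift_t_val Sg).
Notation Lt := (lift_t_tm Sg).
Notation Se_ty := (subst_e_ty Sg).
Notation Se_val := (subst_e_val Sg).
Notation Se := (subst_e_tm Sg).
Notation St_ty := (subst_t_ty Sg).
Notation St_val := (subst_t_val Sg).
Notation St := (subst_t_tm Sg).

Lemma lift_e_lift_e :
  (forall T c d, d <= c -> Le_ty (S c) (Le_ty d T) = Le_ty d (Le_ty c T)) /\
  (forall v c d, d <= c -> Le_val (S c) (Le_val d v) = Le_val d (Le_val c v)) /\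
  (forall e c d, d <= c -> Le (S c) (Le d e) = Le d (Le c e)).
Proof. syntax_induction; try solve [f_equal; auto with arith]; [index_arith | args_case]. Qed.

Lemma lift_t_lift_e :
  (forall T c d, Lt_ty c (Le_ty d T) = Le_ty d (Lt_ty c T)) /\
  (forall v c d, Lt_val c (Le_val d v) = Le_val d (Lt_val c v)) /\
  (forall e c d, Lt c (Le d e) = Le d (Lt c e)).
Proof. syntax_induction; args_case. Qed.

Lemma lift_t_lift_t :
  (forall T c d, d <= c -> Lt_ty (S c) (Lt_ty d T) = Lt_ty d (Lt_ty c T)) /\
  (forall v c d, d <= c -> Lt_val (S c) (Lt_val d v) = Lt_val d (Lt_val c v)) /\
  (forall e c d, d <= c -> Lt (S c) (Lt d e) = Lt d (Lt c e)).
Proof. syntax_induction; try solve [f_equal; auto with arith]; [index_arith | args_case]. Qed.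

Lemma subst_e_lift_eK :
  (forall T d x, Se_ty d x (Le_ty d T) = T) /\
  (forall v d x, Se_val d x (Le_val d v) = v) /\
  (forall e d x, Se d x (Le d e) = e).
Proof.
  syntax_induction; [index_arith|].
  f_equal; rewrite map_map, <- map_id; map_case.
Qed.

Lemma subst_t_lift_tK :
  (forall T d x, St_ty d x (Lt_ty d T) = T) /\
  (forall v d x, St_val d x (Lt_val d v) = v) /\
  (forall e d x, St d x (Lt d e) = e).
Proof.
  syntax_induction; [index_arith|].
  f_equal; rewrite map_map, <- map_id; map_case.
Qed.

Ltac use_triple L :=
  first [ apply (proj1 L) | apply (proj1 (proj2 L)) | apply (proj2 (proj2 L)) ].
Ltac close_with L :=
  first [ reflexivity | solve [use_triple L; lia] | solve [symmetry; use_triple L; lia] ].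

Ltac commute_hook := fail.
Ltac commute_close := first [ reflexivity
  | close_with lift_e_lift_e | close_with lift_t_lift_e | close_with lift_t_lift_t
  | close_with subst_e_lift_eK | close_with subst_t_lift_tK | commute_hook ].
Ltac commute_binder := first [ reflexivity
  | match goal with H : _ |- _ => rewrite H by lia end; f_equal; commute_try
  | match goal with H : _ |- _ => rewrite <- H by lia end; f_equal; commute_try ]
with commute_try := try solve [ commute_close | f_equal; commute_close ].

Ltac commute_induction cancel :=
  syntax_induction;
  try solve [args_case; match goal with Hx : _ |- _ => rewrite Hx by lia end; auto];
  try solve [index_arith; try rewrite cancel; auto];
  f_equal; try solve [ eauto with arith | commute_binder ].

Lemma subst_e_lift_e :
  (forall T k u d, d <= k -> Se_ty (S k) (Le d u) (Le_ty d T) = Le_ty d (Se_ty k u T)) /\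
  (forall v k u d, d <= k -> Se_val (S k) (Le d u) (Le_val d v) = Le_val d (Se_val k u v)) /\
  (forall e k u d, d <= k -> Se (S k) (Le d u) (Le d e) = Le d (Se k u e)).
Proof. commute_induction (proj2 (proj2 subst_e_lift_eK)). Qed.

Lemma subst_e_lift_t :
  (forall T k u d, Se_ty k (Lt d u) (Lt_ty d T) = Lt_ty d (Se_ty k u T)) /\
  (forall v k u d, Se_val k (Lt d u) (Lt_val d v) = Lt_val d (Se_val k u v)) /\
  (forall e k u d, Se k (Lt d u) (Lt d e) = Lt d (Se k u e)).
Proof. commute_induction (proj2 (proj2 subst_e_lift_eK)). Qed.

Lemma subst_t_lift_e :
  (forall T k U d, St_ty k (Le_ty d U) (Le_ty d T) = Le_ty d (St_ty k U T)) /\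
  (forall v k U d, St_val k (Le_ty d U) (Le_val d v) = Le_val d (St_val k U v)) /\
  (forall e k U d, St k (Le_ty d U) (Le d e) = Le d (St k U e)).
Proof. commute_induction (proj1 subst_t_lift_tK). Qed.

Lemma subst_t_lift_t :
  (forall T k U d, d <= k -> St_ty (S k) (Lt_ty d U) (Lt_ty d T) = Lt_ty d (St_ty k U T)) /\
  (forall v k U d, d <= k ->
     St_val (S k) (Lt_ty d U) (Lt_val d v) = Lt_val d (St_val k U v)) /\
  (forall e k U d, d <= k -> St (S k) (Lt_ty d U) (Lt d e) = Lt d (St k U e)).
Proof. commute_induction (proj1 subst_t_lift_tK). Qed.

Ltac commute_hook ::= first [ close_with subst_e_lift_e | close_with subst_e_lift_t
  | close_with subst_t_lift_e | close_with subst_t_lift_t ].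

Lemma lift_e_subst_e :
  (forall T c d w, d <= c -> Le_ty c (Se_ty d w T) = Se_ty d (Le c w) (Le_ty (S c) T)) /\
  (forall v c d w, d <= c -> Le_val c (Se_val d w v) = Se_val d (Le c w) (Le_val (S c) v)) /\
  (forall e c d w, d <= c -> Le c (Se d w e) = Se d (Le c w) (Le (S c) e)).
Proof. commute_induction (proj2 (proj2 subst_e_lift_eK)). Qed.

Lemma lift_t_subst_e :
  (forall T c d w, Lt_ty c (Se_ty d w T) = Se_ty d (Lt c w) (Lt_ty c T)) /\
  (forall v c d w, Lt_val c (Se_val d w v) = Se_val d (Lt c w) (Lt_val c v)) /\
  (forall e c d w, Lt c (Se d w e) = Se d (Lt c w) (Lt c e)).
Proof. commute_induction (proj2 (proj2 subst_e_lift_eK)). Qed.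

Lemma lift_e_subst_t :
  (forall T c d W, Le_ty c (St_ty d W T) = St_ty d (Le_ty c W) (Le_ty c T)) /\
  (forall v c d W, Le_val c (St_val d W v) = St_val d (Le_ty c W) (Le_val c v)) /\
  (forall e c d W, Le c (St d W e) = St d (Le_ty c W) (Le c e)).
Proof. commute_induction (proj1 subst_t_lift_tK). Qed.

Lemma lift_t_subst_t :
  (forall T c d W, d <= c -> Lt_ty c (St_ty d W T) = St_ty d (Lt_ty c W) (Lt_ty (S c) T)) /\
  (forall v c d W, d <= c ->
     Lt_val c (St_val d W v) = St_val d (Lt_ty c W) (Lt_val (S c) v)) /\
  (forall e c d W, d <= c -> Lt c (St d W e) = St d (Lt_ty c W) (Lt (S c) e)).
Proof. commute_induction (proj1 subst_t_lift_tK). Qed.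

Ltac commute_hook ::= first [ close_with subst_e_lift_e | close_with subst_e_lift_t
  | close_with subst_t_lift_e | close_with subst_t_lift_t
  | close_with lift_e_subst_e | close_with lift_t_subst_e
  | close_with lift_e_subst_t | close_with lift_t_subst_t ].

Lemma subst_e_subst_e :
  (forall T k u d w, d <= k ->
     Se_ty k u (Se_ty d w T) = Se_ty d (Se k u w) (Se_ty (S k) (Le d u) T)) /\
  (forall v k u d w, d <= k ->
     Se_val k u (Se_val d w v) = Se_val d (Se k u w) (Se_val (S k) (Le d u) v)) /\
  (forall e k u d w, d <= k ->
     Se k u (Se d w e) = Se d (Se k u w) (Se (S k) (Le d u) e)).
Proof. commute_induction (proj2 (proj2 subst_e_lift_eK)). Qed.

Lemma subst_t_subst_e :
  (forall T k U d w, St_ty k U (Se_ty d w T) = Se_ty d (St k U w) (St_ty k (Le_ty d U) T)) /\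
  (forall v k U d w,
     St_val k U (Se_val d w v) = Se_val d (St k U w) (St_val k (Le_ty d U) v)) /\
  (forall e k U d w, St k U (Se d w e) = Se d (St k U w) (St k (Le_ty d U) e)).
Proof. commute_induction (proj1 subst_e_lift_eK). Qed.

Lemma subst_e_subst_t :
  (forall T k u d W, Se_ty k u (St_ty d W T) = St_ty d (Se_ty k u W) (Se_ty k (Lt d u) T)) /\
  (forall v k u d W,
     Se_val k u (St_val d W v) = St_val d (Se_ty k u W) (Se_val k (Lt d u) v)) /\
  (forall e k u d W, Se k u (St d W e) = St d (Se_ty k u W) (Se k (Lt d u) e)).
Proof. commute_induction (proj2 (proj2 subst_t_lift_tK)). Qed.

Lemma subst_t_subst_t :
  (forall T k U d W, d <= k ->
     St_ty k U (St_ty d W T) = St_ty d (St_ty k U W) (St_ty (S k) (Lt_ty d U) T)) /\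
  (forall v k U d W, d <= k ->
     St_val k U (St_val d W v) = St_val d (St_ty k U W) (St_val (S k) (Lt_ty d U) v)) /\
  (forall e k U d W, d <= k ->
     St k U (St d W e) = St d (St_ty k U W) (St (S k) (Lt_ty d U) e)).
Proof. commute_induction (proj1 subst_t_lift_tK). Qed.

End LiftSubst.

Section Actions.
Context (Sg : sig).
Notation Le_ty := (lift_e_ty Sg).
Notation Le_val := (lift_e_val Sg).
Notation Le := (lift_e_tm Sg).
Notation Lt_ty := (lift_t_ty Sg).
Notation Lt_val := (lift_t_val Sg).
Notation Lt := (lift_t_tm Sg).
Notation Se_ty := (subst_e_ty Sg).
Notation Se_val := (subst_e_val Sg).
Notation Se := (subst_e_tm Sg).
Notation St_ty := (subst_t_ty Sg).
Notation St_val := (subst_t_val Sg).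
Notation St := (subst_t_tm Sg).
Notation tm := (tm Sg).
Notation ty := (ty Sg).
Notation val := (val Sg).

Inductive action :=
  | ALiftE (c : nat) | ALiftT (c : nat) | ASubstE (k : nat) (u : tm) | ASubstT (k : nat) (U : ty).

Definition act_ty (s : action) (T : ty) : ty :=
  match s with
  | ALiftE c => Le_ty c T | ALiftT c => Lt_ty c T
  | ASubstE k u => Se_ty k u T | ASubstT k U => St_ty k U T
  end.

Definition act_val (s : action) (v : val) : val :=
  match s with
  | ALiftE c => Le_val c v | ALiftT c => Lt_val c v
  | ASubstE k u => Se_val k u v | ASubstT k U => St_val k U v
  end.

Definition act_tm (s : action) (e : tm) : tm :=
  match s with
  | ALiftE c => Le c e | ALiftT c => Lt c e
  | ASubstE k u => Se k u e | ASubstT k U => St k U e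
  end.

Definition up_e (s : action) : action :=
  match s with
  | ALiftE c => ALiftE (S c) | ALiftT c => ALiftT c
  | ASubstE k u => ASubstE (S k) (Le 0 u) | ASubstT k U => ASubstT k (Le_ty 0 U)
  end.

Definition up_t (s : action) : action :=
  match s with
  | ALiftE c => ALiftE c | ALiftT c => ALiftT (S c)
  | ASubstE k u => ASubstE k (Lt 0 u) | ASubstT k U => ASubstT (S k) (Lt_ty 0 U)
  end.

Lemma act_Val s v : act_tm s (Val v) = Val (act_val s v).
Proof. destruct s; reflexivity. Qed.

Lemma act_App s a b : act_tm s (App a b) = App (act_tm s a) (act_tm s b).
Proof. destruct s; reflexivity. Qed.

Lemma act_TApp s a T : act_tm s (TApp a T) = TApp (act_tm s a) (act_ty s T).
Proof. destruct s; reflexivity. Qed.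

Lemma act_Op s o es : act_tm s (Op o es) = Op o (map (act_tm s) es).
Proof. destruct s; reflexivity. Qed.

Lemma act_Wait s T e1 e2 l :
  act_tm s (Wait T e1 e2 l) = Wait (act_ty s T) (act_tm (up_e s) e1) (act_tm s e2) l.
Proof. destruct s; reflexivity. Qed.

Lemma act_Active s T e1 e2 v l : act_tm s (Active T e1 e2 v l) =
  Active (act_ty s T) (act_tm (up_e s) e1) (act_tm s e2) (act_val s v) l.
Proof. destruct s; reflexivity. Qed.

Lemma act_Blame s l : act_tm s (Blame l) = Blame l.
Proof. destruct s; reflexivity. Qed.

Lemma act_VConst s k : act_val s (VConst k) = VConst k.
Proof. destruct s; reflexivity. Qed.

Lemma act_VAbs s T e : act_val s (VAbs T e) = VAbs (act_ty s T) (act_tm (up_e s) e).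
Proof. destruct s; reflexivity. Qed.

Lemma act_VTAbs s e : act_val s (VTAbs e) = VTAbs (act_tm (up_t s) e).
Proof. destruct s; reflexivity. Qed.

Lemma act_VCast s T1 T2 l : act_val s (VCast T1 T2 l) = VCast (act_ty s T1) (act_ty s T2) l.
Proof. destruct s; reflexivity. Qed.

Lemma act_TBase s b : act_ty s (TBase b) = TBase b.
Proof. destruct s; reflexivity. Qed.

Lemma act_TFun s A B : act_ty s (TFun A B) = TFun (act_ty s A) (act_ty (up_e s) B).
Proof. destruct s; reflexivity. Qed.

Lemma act_TAll s A : act_ty s (TAll A) = TAll (act_ty (up_t s) A).
Proof. destruct s; reflexivity. Qed.

Lemma act_TRef s A e : act_ty s (TRef A e) = TRef (act_ty s A) (act_tm (up_e s) e).
Proof. destruct s; reflexivity. Qed.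

Lemma up_e_Var0 s : act_tm (up_e s) (Var 0) = Var 0.
Proof. destruct s; simpl; index_arith. Qed.

Lemma up_t_TVar0 s : act_ty (up_t s) (TVar 0) = TVar 0.
Proof. destruct s; simpl; index_arith. Qed.

Lemma up_e_lift_ty s x : act_ty (up_e s) (Le_ty 0 x) = Le_ty 0 (act_ty s x).
Proof.
  destruct s; simpl.
  - apply (proj1 (lift_e_lift_e Sg)); lia.
  - apply (proj1 (lift_t_lift_e Sg)).
  - apply (proj1 (subst_e_lift_e Sg)); lia.
  - apply (proj1 (subst_t_lift_e Sg)).
Qed.

Lemma up_e_lift_val s x : act_val (up_e s) (Le_val 0 x) = Le_val 0 (act_val s x).
Proof.
  destruct s; simpl.
  - apply (proj1 (proj2 (lift_e_lift_e Sg))); lia.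
  - apply (proj1 (proj2 (lift_t_lift_e Sg))).
  - apply (proj1 (proj2 (subst_e_lift_e Sg))); lia.
  - apply (proj1 (proj2 (subst_t_lift_e Sg))).
Qed.

Lemma up_e_lift_tm s x : act_tm (up_e s) (Le 0 x) = Le 0 (act_tm s x).
Proof.
  destruct s; simpl.
  - apply (proj2 (proj2 (lift_e_lift_e Sg))); lia.
  - apply (proj2 (proj2 (lift_t_lift_e Sg))).
  - apply (proj2 (proj2 (subst_e_lift_e Sg))); lia.
  - apply (proj2 (proj2 (subst_t_lift_e Sg))).
Qed.

Lemma up_t_lift_ty s x : act_ty (up_t s) (Lt_ty 0 x) = Lt_ty 0 (act_ty s x).
Proof.
  destruct s; simpl.
  - symmetry; apply (proj1 (lift_t_lift_e Sg)).
  - apply (proj1 (lift_t_lift_t Sg)); lia.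
  - apply (proj1 (subst_e_lift_t Sg)).
  - apply (proj1 (subst_t_lift_t Sg)); lia.
Qed.

Lemma up_t_lift_val s x : act_val (up_t s) (Lt_val 0 x) = Lt_val 0 (act_val s x).
Proof.
  destruct s; simpl.
  - symmetry; apply (proj1 (proj2 (lift_t_lift_e Sg))).
  - apply (proj1 (proj2 (lift_t_lift_t Sg))); lia.
  - apply (proj1 (proj2 (subst_e_lift_t Sg))).
  - apply (proj1 (proj2 (subst_t_lift_t Sg))); lia.
Qed.

Lemma up_t_lift_tm s x : act_tm (up_t s) (Lt 0 x) = Lt 0 (act_tm s x).
Proof.
  destruct s; simpl.
  - symmetry; apply (proj2 (proj2 (lift_t_lift_e Sg))).
  - apply (proj2 (proj2 (lift_t_lift_t Sg))); lia.
  - apply (proj2 (proj2 (subst_e_lift_t Sg))).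
  - apply (proj2 (proj2 (subst_t_lift_t Sg))); lia.
Qed.

Lemma up_e2_lift1_ty s x : act_ty (up_e (up_e s)) (Le_ty 1 x) = Le_ty 1 (act_ty (up_e s) x).
Proof.
  destruct s; simpl.
  - apply (proj1 (lift_e_lift_e Sg)); lia.
  - apply (proj1 (lift_t_lift_e Sg)).
  - rewrite <- (proj2 (proj2 (lift_e_lift_e Sg)) u 0 0) by lia.
    apply (proj1 (subst_e_lift_e Sg)); lia.
  - rewrite <- (proj1 (lift_e_lift_e Sg) U 0 0) by lia.
    apply (proj1 (subst_t_lift_e Sg)).
Qed.

Lemma act_subst_e0 s w e : act_tm s (Se 0 w e) = Se 0 (act_tm s w) (act_tm (up_e s) e).
Proof.
  destruct s; simpl.
  - apply (proj2 (proj2 (lift_e_subst_e Sg))); lia.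
  - apply (proj2 (proj2 (lift_t_subst_e Sg))).
  - apply (proj2 (proj2 (subst_e_subst_e Sg))); lia.
  - apply (proj2 (proj2 (subst_t_subst_e Sg))).
Qed.

Lemma act_subst_t0 s W e : act_tm s (St 0 W e) = St 0 (act_ty s W) (act_tm (up_t s) e).
Proof.
  destruct s; simpl.
  - apply (proj2 (proj2 (lift_e_subst_t Sg))).
  - apply (proj2 (proj2 (lift_t_subst_t Sg))); lia.
  - apply (proj2 (proj2 (subst_e_subst_t Sg))).
  - apply (proj2 (proj2 (subst_t_subst_t Sg))); lia.
Qed.

End Actions.

Arguments ALiftE {Sg} c.
Arguments ALiftT {Sg} c.
Arguments ASubstE {Sg} k u.
Arguments ASubstT {Sg} k U.

Hint Rewrite act_Val act_App act_TApp act_Op act_Wait act_Active act_Blame act_VConst act_VAbs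
  act_VTAbs act_VCast act_TBase act_TFun act_TAll act_TRef
  up_e_Var0 up_t_TVar0 up_e_lift_ty up_e_lift_val up_e_lift_tm up_t_lift_ty up_t_lift_val
  up_t_lift_tm up_e2_lift1_ty act_subst_e0 act_subst_t0 : act_simpl.

Section Evaluation.
Context (Sg : sig).
Notation tm := (tm Sg).
Notation val := (val Sg).
Notation red := (red Sg).

Inductive cstep : tm -> tm -> Prop :=
 | CS_Red e e' : red e e' -> cstep e e'
 | CS_App1 e1 e1' e2 : cstep e1 e1' -> cstep (App e1 e2) (App e1' e2)
 | CS_App2 v e2 e2' : cstep e2 e2' -> cstep (App (Val v) e2) (App (Val v) e2')
 | CS_TApp e e' T : cstep e e' -> cstep (TApp e T) (TApp e' T)
 | CS_Wait T e1 e2 e2' l : cstep e2 e2' -> cstep (Wait T e1 e2 l) (Wait T e1 e2' l)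
 | CS_Active T e1 e2 e2' v l :
     cstep e2 e2' -> cstep (Active T e1 e2 v l) (Active T e1 e2' v l)
 | CS_Op o vs e e' es : cstep e e' ->
     cstep (Op o (map Val vs ++ e :: es)) (Op o (map Val vs ++ e' :: es))
 | CS_BApp1 l e2 : cstep (App (Blame l) e2) (Blame l)
 | CS_BApp2 v l : cstep (App (Val v) (Blame l)) (Blame l)
 | CS_BTApp l T : cstep (TApp (Blame l) T) (Blame l)
 | CS_BWait T e1 l l' : cstep (Wait T e1 (Blame l) l') (Blame l)
 | CS_BActive T e1 v l l' : cstep (Active T e1 (Blame l) v l') (Blame l)
 | CS_BOp o vs l es : cstep (Op o (map Val vs ++ Blame l :: es)) (Blame l).

Definition csteps := clos_refl_trans_1n tm cstep.

Definition notval (e : tm) := forall v, e <> Val v.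

Lemma red_notval e e' : red e e' -> notval e.
Proof. destruct 1; intros w Hw; discriminate. Qed.

Lemma cstep_notval e e' : cstep e e' -> notval e.
Proof. destruct 1; try (intros w Hw; discriminate). eapply red_notval; eauto. Qed.

Lemma cstep_val v e : cstep (Val v) e -> False.
Proof. intros H; apply cstep_notval in H; eapply H; eauto. Qed.

Lemma red_blame l e : red (Blame l) e -> False.
Proof. inversion 1. Qed.

Lemma cstep_blame l e : cstep (Blame l) e -> False.
Proof. inversion 1; subst. eapply red_blame; eauto. Qed.

Lemma cstep_var n e : cstep (Var n) e -> False.
Proof. inversion 1; match goal with Hr : red _ _ |- _ => inversion Hr end. Qed.

Lemma map_Val_app_inj (vs1 vs2 : list val) x1 x2 l1 l2 :
  map Val vs1 ++ x1 :: l1 = map Val vs2 ++ x2 :: l2 -> notval x1 -> notval x2 ->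
  vs1 = vs2 /\ x1 = x2 /\ l1 = l2.
Proof.
  revert vs2; induction vs1 as [|a vs1 IH]; intros [|b vs2]; simpl; intros H N1 N2;
    inversion H; subst.
  - auto.
  - exfalso; eapply N1; eauto.
  - exfalso; eapply N2; eauto.
  - destruct (IH vs2) as [? [? ?]]; auto; subst; auto.
Qed.

Lemma map_const_app_inv (ks : list (sK Sg)) vs x es :
  map (const Sg) ks = map Val vs ++ x :: es -> exists k, x = const Sg k.
Proof. revert ks; induction vs; intros [|k ks]; simpl; intros H; inversion H; subst; eauto. Qed.

Lemma red_App_inv e1 e2 e :
  red (App e1 e2) e -> (exists v, e1 = Val v) /\ (exists v, e2 = Val v).
Proof. inversion 1; subst; eauto. Qed.

Lemma red_TApp_inv e1 T e : red (TApp e1 T) e -> exists v, e1 = Val v.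
Proof. inversion 1; subst; eauto. Qed.

Lemma red_Wait_inv T e1 e2 l e : red (Wait T e1 e2 l) e -> exists v, e2 = Val v.
Proof. inversion 1; subst; eauto. Qed.

Lemma red_Active_inv T e1 e2 v l e : red (Active T e1 e2 v l) e -> exists v, e2 = Val v.
Proof. inversion 1; subst; unfold ttrue, tfalse, const; eauto. Qed.

Lemma red_Op_inv o es e : red (Op o es) e -> exists ks, es = map (const Sg) ks.
Proof. inversion 1; subst; eauto. Qed.

Ltac absurd_step := match goal with
  | H : cstep (Val _) _ |- _ => exfalso; eapply cstep_val; exact H
  | H : cstep (Blame _) _ |- _ => exfalso; eapply cstep_blame; exact H
  | H : red (Blame _) _ |- _ => exfalso; eapply red_blame; exact H
  | H : red (App _ _) _ |- _ => let H1 := fresh in let H2 := fresh in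
       destruct (red_App_inv _ _ _ H) as [[? H1] [? H2]]; subst; try discriminate; absurd_step
  | H : red (TApp _ _) _ |- _ => let H1 := fresh in
       destruct (red_TApp_inv _ _ _ H) as [? H1]; subst; try discriminate; absurd_step
  | H : red (Wait _ _ _ _) _ |- _ => let H1 := fresh in
       destruct (red_Wait_inv _ _ _ _ _ H) as [? H1]; subst; try discriminate; absurd_step
  | H : red (Active _ _ _ _ _) _ |- _ => let H1 := fresh in
       destruct (red_Active_inv _ _ _ _ _ _ H) as [? H1]; subst; try discriminate; absurd_step
  end.

Section Deterministic.
Hypothesis true_neq_false : strue Sg <> sfalse Sg.

Lemma red_deterministic e e1 e2 : red e e1 -> red e e2 -> e1 = e2.
Proof.
  intros H1 H2; destruct H1; inversion H2; subst; auto; try (simpl in *; tauto);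
    try discriminate.
  - assert (ks0 = ks); [|subst; congruence].
    apply (map_injective (const Sg)); auto.
    intros a b Hab; unfold const in Hab; inversion Hab; auto.
  - exfalso; apply true_neq_false; congruence.
Qed.

Lemma cstep_deterministic e e1 e2 : cstep e e1 -> cstep e e2 -> e1 = e2.
Proof.
  intros H; revert e2; induction H; intros e3 H3; inversion H3; subst; try reflexivity;
    try solve [absurd_step]; try solve [f_equal; auto].
  { eapply red_deterministic; eauto. }
  all: try (match goal with Hr : red (Op _ _) _ |- _ =>
         let ks := fresh "ks" in let Hks := fresh "Hks" in let k := fresh "k" in
         destruct (red_Op_inv _ _ _ Hr) as [ks Hks];
         first [ destruct (map_const_app_inv _ _ _ _ Hks) as [k ?]
               | destruct (map_const_app_inv _ _ _ _ (eq_sym Hks)) as [k ?] ];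
         unfold const in *; subst; solve [absurd_step | discriminate] end).
  all: match goal with Heq : map Val _ ++ _ :: _ = map Val _ ++ _ :: _ |- _ =>
         let a := fresh in let b := fresh in let c := fresh in
         destruct (map_Val_app_inj _ _ _ _ _ _ Heq) as [a [b c]];
         [ try (eapply cstep_notval; eassumption); try (intros ? ?; discriminate)
         | try (eapply cstep_notval; eassumption); try (intros ? ?; discriminate)
         | subst; try solve [absurd_step]; try solve [repeat f_equal; auto]; try congruence ]
       end.
Qed.

End Deterministic.

Lemma csteps_refl x : csteps x x.
Proof. constructor. Qed.

Lemma csteps_one x y : cstep x y -> csteps x y.
Proof. intros; econstructor; eauto; constructor. Qed.

Lemma csteps_trans x y z : csteps x y -> csteps y z -> csteps x z.
Proof. induction 1; intros; auto. econstructor; eauto. apply IHclos_refl_trans_1n; auto. Qed.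

Lemma csteps_congr (F : tm -> tm) : (forall x y, cstep x y -> cstep (F x) (F y)) ->
  forall x y, csteps x y -> csteps (F x) (F y).
Proof. intros HF x y; induction 1; [constructor | econstructor; eauto]. Qed.

Lemma csteps_App1 e2 x y : csteps x y -> csteps (App x e2) (App y e2).
Proof. apply (csteps_congr (fun x => App x e2)); intros; apply CS_App1; auto. Qed.

Lemma csteps_App2 v x y : csteps x y -> csteps (App (Val v) x) (App (Val v) y).
Proof. apply (csteps_congr (fun x => App (Val v) x)); intros; apply CS_App2; auto. Qed.

Lemma csteps_TApp T x y : csteps x y -> csteps (TApp x T) (TApp y T).
Proof. apply (csteps_congr (fun x => TApp x T)); intros; apply CS_TApp; auto. Qed.

Lemma csteps_Wait T e l x y : csteps x y -> csteps (Wait T e x l) (Wait T e y l).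
Proof. apply (csteps_congr (fun x => Wait T e x l)); intros; apply CS_Wait; auto. Qed.

Lemma csteps_Active T e v l x y : csteps x y -> csteps (Active T e x v l) (Active T e y v l).
Proof. apply (csteps_congr (fun x => Active T e x v l)); intros; apply CS_Active; auto. Qed.

Lemma csteps_Op o vs es x y :
  csteps x y -> csteps (Op o (map Val vs ++ x :: es)) (Op o (map Val vs ++ y :: es)).
Proof. apply (csteps_congr (fun x => Op o (map Val vs ++ x :: es))); intros; apply CS_Op; auto. Qed.

End Evaluation.

Ltac csteps_chain := repeat (eapply csteps_trans; [ first [ eassumption
  | apply csteps_App1; eassumption | apply csteps_App2; eassumption
  | apply csteps_TApp; eassumption | apply csteps_Wait; eassumption
  | apply csteps_Active; eassumption | apply csteps_Op; eassumption ] | ]).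

Ltac blame_step :=
  first [ apply CS_BApp1 | apply CS_BApp2 | apply CS_BTApp | apply CS_BWait | apply CS_BActive
        | apply CS_BOp ].

(** * Stability of evaluation under lifting and substitution *)

Section Stability.
Context (Sg : sig).
Notation tm := (tm Sg).
Notation val := (val Sg).
Notation red := (red Sg).
Notation cstep := (cstep Sg).
Notation action := (action Sg).
Notation act_ty := (act_ty Sg).
Notation act_val := (act_val Sg).
Notation act_tm := (act_tm Sg).

(* Casts out of a type variable are the only redexes an action can break:
   [<α => {x:T|e}>] fires [R_PreCheck], but once [α] is instantiated by a
   refinement type the cast fires [R_Forget] instead. *)
Inductive tvar_cast_redex : tm -> nat -> Prop :=
 | TCR_Here j T2 l v : tvar_cast_redex (App (Val (VCast (TVar j) T2 l)) (Val v)) j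
 | TCR_App1 e1 e2 j : tvar_cast_redex e1 j -> tvar_cast_redex (App e1 e2) j
 | TCR_App2 v e2 j : tvar_cast_redex e2 j -> tvar_cast_redex (App (Val v) e2) j
 | TCR_TApp e T j : tvar_cast_redex e j -> tvar_cast_redex (TApp e T) j
 | TCR_Wait T e1 e2 l j : tvar_cast_redex e2 j -> tvar_cast_redex (Wait T e1 e2 l) j
 | TCR_Active T e1 e2 v l j :
     tvar_cast_redex e2 j -> tvar_cast_redex (Active T e1 e2 v l) j
 | TCR_Op o vs e es j :
     tvar_cast_redex e j -> tvar_cast_redex (Op o (map Val vs ++ e :: es)) j.

Definition act_avoids_tvar (s : action) (j : nat) : Prop :=
  match s with ASubstT k _ => j <> k | _ => True end.

Lemma act_const s k : act_tm s (const Sg k) = const Sg k.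
Proof. destruct s; reflexivity. Qed.

Lemma map_act_Val s (vs : list val) : map (act_tm s) (map Val vs) = map Val (map (act_val s) vs).
Proof. rewrite !map_map; apply map_ext; intros; apply act_Val. Qed.

Lemma red_act s r r' : red r r' ->
  (forall j T2 l v, r = App (Val (VCast (TVar j) T2 l)) (Val v) -> act_avoids_tvar s j) ->
  red (act_tm s r) (act_tm s r').
Proof.
  intros H Hok; destruct H; autorewrite with act_simpl; try solve [constructor].
  - rewrite map_map. replace (map (fun x => act_tm s (const Sg x)) ks) with (map (const Sg) ks).
    + rewrite act_const; constructor; auto.
    + apply map_ext; intros; rewrite act_const; auto.
  - constructor. destruct T1; simpl in *; try tauto; destruct s; simpl; auto.
    specialize (Hok a _ _ _ eq_refl). simpl in Hok. index_arith.
  - unfold ttrue, const; autorewrite with act_simpl; constructor.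
  - unfold tfalse, const; autorewrite with act_simpl; constructor.
Qed.

Lemma cstep_act s x y : cstep x y -> (forall j, tvar_cast_redex x j -> act_avoids_tvar s j) ->
  cstep (act_tm s x) (act_tm s y).
Proof.
  induction 1; intros Hok; autorewrite with act_simpl; try solve [constructor].
  - constructor. apply red_act; auto. intros; subst; apply Hok; constructor.
  - constructor; apply IHcstep; intros; apply Hok; eauto using tvar_cast_redex.
  - constructor; apply IHcstep; intros; apply Hok; eauto using tvar_cast_redex.
  - constructor; apply IHcstep; intros; apply Hok; eauto using tvar_cast_redex.
  - constructor; apply IHcstep; intros; apply Hok; eauto using tvar_cast_redex.
  - constructor; apply IHcstep; intros; apply Hok; eauto using tvar_cast_redex.
  - rewrite !map_app; simpl; rewrite !map_act_Val.
    apply CS_Op; apply IHcstep; intros; apply Hok; eauto using tvar_cast_redex.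
  - rewrite map_app; simpl; rewrite map_act_Val, act_Blame. apply CS_BOp.
Qed.

Lemma tvar_cast_redex_notval e j : tvar_cast_redex e j -> notval Sg e.
Proof. destruct 1; intros w Hw; discriminate. Qed.

Lemma tvar_cast_redex_val v j : tvar_cast_redex (Val v) j -> False.
Proof. intros H; apply tvar_cast_redex_notval in H; eapply H; eauto. Qed.

Lemma tvar_cast_redex_blame l j : tvar_cast_redex (Blame l) j -> False.
Proof. inversion 1. Qed.

Ltac absurd_redex := match goal with
  | H : tvar_cast_redex (Val _) _ |- _ => exfalso; eapply tvar_cast_redex_val; exact H
  | H : tvar_cast_redex (Blame _) _ |- _ => exfalso; eapply tvar_cast_redex_blame; exact H
  end.

Lemma act_ty_TVar_inv s T j : act_ty s T = TVar j -> exists i, T = TVar i.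
Proof. destruct T; destruct s; simpl; intros H; try discriminate; eauto. Qed.

Lemma act_tm_Val_inv s x v :
  act_tm s x = Val v -> (exists w, x = Val w) \/ (exists n, x = Var n).
Proof. destruct x; destruct s; simpl; intros H; try discriminate; eauto. Qed.

Lemma cstep_act_notval s x y : cstep x y -> notval Sg (act_tm s x).
Proof.
  intros H v Hv. destruct (act_tm_Val_inv _ _ _ Hv) as [[w ->]|[n ->]].
  - eapply cstep_val; eauto.
  - eapply cstep_var; eauto.
Qed.

Lemma tvar_cast_redex_act_red s x y j' : red x y -> tvar_cast_redex (act_tm s x) j' ->
  exists j, tvar_cast_redex x j /\ act_ty s (TVar j) = TVar j'.
Proof.
  destruct 1; intros Hp; autorewrite with act_simpl in Hp; inversion Hp; subst; try absurd_redex.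
  - rewrite map_map in *.
    assert (Hm : map (fun x => act_tm s (const Sg x)) ks = map (const Sg) ks)
      by (apply map_ext; intros; apply act_const).
    match goal with Hq : map Val _ ++ _ :: _ = _ |- _ => rewrite Hm in Hq; symmetry in Hq;
      destruct (map_const_app_inv _ _ _ _ _ Hq) as [k' Hk] end.
    subst. unfold const in *. absurd_redex.
  - match goal with Hq : TVar _ = act_ty s T1 |- _ => symmetry in Hq;
      destruct (act_ty_TVar_inv _ _ _ Hq) as [i ->] end.
    exists i; split; [constructor | auto].
  - unfold ttrue, const in *; autorewrite with act_simpl in *; absurd_redex.
  - unfold tfalse, const in *; autorewrite with act_simpl in *; absurd_redex.
Qed.

Lemma tvar_cast_redex_act s x y j' : cstep x y -> tvar_cast_redex (act_tm s x) j' ->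
  exists j, tvar_cast_redex x j /\ act_ty s (TVar j) = TVar j'.
Proof.
  intros H; revert j'; induction H; intros j' Hp; autorewrite with act_simpl in Hp.
  { eapply tvar_cast_redex_act_red; eauto. }
  all: inversion Hp; subst; try absurd_redex; try discriminate;
    try solve [exfalso; eapply (cstep_act_notval s _ _ H); eauto];
    try solve [destruct (IHcstep _ ltac:(eassumption)) as [j [? ?]];
               exists j; split; [eauto using tvar_cast_redex | auto]].
  - rewrite map_app in Hp; simpl in Hp; rewrite map_act_Val in Hp. inversion Hp; subst.
    match goal with Hq : map Val _ ++ _ :: _ = map Val _ ++ _ :: _ |- _ =>
      destruct (map_Val_app_inj _ _ _ _ _ _ _ Hq) as [? [? ?]] end;
      [eapply tvar_cast_redex_notval; eauto | eapply cstep_act_notval; eauto |].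
    subst. match goal with Hpc : tvar_cast_redex (act_tm _ e) _ |- _ =>
      destruct (IHcstep _ Hpc) as [j [? ?]] end.
    exists j; split; [eauto using tvar_cast_redex | auto].
  - rewrite map_app in Hp; simpl in Hp; rewrite map_act_Val, ?act_Blame in Hp.
    inversion Hp; subst.
    match goal with Hq : map Val _ ++ _ :: _ = map Val _ ++ _ :: _ |- _ =>
      destruct (map_Val_app_inj _ _ _ _ _ _ _ Hq) as [? [? ?]] end;
      [eapply tvar_cast_redex_notval; eauto | intros ? ?; discriminate |].
    subst; absurd_redex.
Qed.

(* The type variables below [m] were introduced by lifting, so no stuck cast
   mentions them: these are the only ones an [ASubstT] may instantiate. *)
Definition act_valid (m : nat) (s : action) (m' : nat) : Prop :=
  match s with
  | ALiftE _ | ASubstE _ _ => m' = m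
  | ALiftT c => c <= m /\ m' = S m
  | ASubstT k _ => k < m /\ m = S m'
  end.

Fixpoint acts (ss : list action) (x : tm) : tm :=
  match ss with [] => x | s :: ss' => acts ss' (act_tm s x) end.

Fixpoint acts_valid (m : nat) (ss : list action) : Prop :=
  match ss with [] => True | s :: ss' => exists m', act_valid m s m' /\ acts_valid m' ss' end.

Lemma cstep_acts ss : forall m x y, acts_valid m ss ->
  (forall j, tvar_cast_redex x j -> m <= j) -> cstep x y -> cstep (acts ss x) (acts ss y).
Proof.
  induction ss as [|s ss IH]; simpl; intros m x y Hv Hp Hs; auto.
  destruct Hv as [m' [Hva Hv]].
  apply (IH m'); auto.
  - intros j' Hj'. destruct (tvar_cast_redex_act _ _ _ _ Hs Hj') as [j [Hj Heq]].
    specialize (Hp _ Hj). destruct s; simpl in *; subst.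
    + inversion Heq; subst; lia.
    + revert Heq; index_arith; intros Heq; inversion Heq; lia.
    + inversion Heq; subst; lia.
    + destruct Hva as [Hk ->]. revert Heq; index_arith; intros Heq; inversion Heq; lia.
  - apply cstep_act; auto. intros j Hj. specialize (Hp _ Hj). destruct s; simpl in *; auto; lia.
Qed.

Definition stable_step m a a' := forall ss, acts_valid m ss -> cstep (acts ss a) (acts ss a').

Lemma cstep_stable x y : cstep x y -> stable_step 0 x y.
Proof. intros H ss Hv. eapply cstep_acts; eauto. intros j _; lia. Qed.

Lemma stable_step_cstep m a a' : stable_step m a a' -> cstep a a'.
Proof. intros H; apply (H []); simpl; auto. Qed.

Lemma stable_step_act m a a' s m' :
  stable_step m a a' -> act_valid m s m' -> stable_step m' (act_tm s a) (act_tm s a').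
Proof. intros H Hv ss Hss. apply (H (s :: ss)). simpl; eauto. Qed.

End Stability.

(** * Cotermination *)

Section InnerEvaluation.
Context (Sg : sig).
Notation tm := (tm Sg).
Notation ty := (ty Sg).
Notation val := (val Sg).
Notation action := (action Sg).
Notation act_ty := (act_ty Sg).
Notation act_val := (act_val Sg).
Notation act_tm := (act_tm Sg).
Notation stable_step := (stable_step Sg).

(* [pr_tm m a b]: [b] arises from [a] by [stable_step]s of arbitrary
   subterms, also under binders; the index grows under each type binder. *)
Inductive pr_ty : nat -> ty -> ty -> Prop :=
 | PrT_Base m b : pr_ty m (TBase b) (TBase b)
 | PrT_Var m a : pr_ty m (TVar a) (TVar a)
 | PrT_Fun m A1 A2 B1 B2 : pr_ty m A1 B1 -> pr_ty m A2 B2 -> pr_ty m (TFun A1 A2) (TFun B1 B2)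
 | PrT_All m A B : pr_ty (S m) A B -> pr_ty m (TAll A) (TAll B)
 | PrT_Ref m A B e e' : pr_ty m A B -> pr_tm m e e' -> pr_ty m (TRef A e) (TRef B e')
with pr_val : nat -> val -> val -> Prop :=
 | PrV_Const m k : pr_val m (VConst k) (VConst k)
 | PrV_Abs m T T' e e' : pr_ty m T T' -> pr_tm m e e' -> pr_val m (VAbs T e) (VAbs T' e')
 | PrV_TAbs m e e' : pr_tm (S m) e e' -> pr_val m (VTAbs e) (VTAbs e')
 | PrV_Cast m A A' B B' l :
     pr_ty m A A' -> pr_ty m B B' -> pr_val m (VCast A B l) (VCast A' B' l)
with pr_tm : nat -> tm -> tm -> Prop :=
 | Pr_Val m v v' : pr_val m v v' -> pr_tm m (Val v) (Val v')
 | Pr_Var m x : pr_tm m (Var x) (Var x)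
 | Pr_Op m o es es' : pr_list m es es' -> pr_tm m (Op o es) (Op o es')
 | Pr_App m a1 a2 b1 b2 : pr_tm m a1 b1 -> pr_tm m a2 b2 -> pr_tm m (App a1 a2) (App b1 b2)
 | Pr_TApp m a b T T' : pr_tm m a b -> pr_ty m T T' -> pr_tm m (TApp a T) (TApp b T')
 | Pr_Wait m T T' e1 e1' e2 e2' l : pr_ty m T T' -> pr_tm m e1 e1' -> pr_tm m e2 e2' ->
     pr_tm m (Wait T e1 e2 l) (Wait T' e1' e2' l)
 | Pr_Active m T T' e1 e1' e2 e2' v v' l :
     pr_ty m T T' -> pr_tm m e1 e1' -> pr_tm m e2 e2' -> pr_val m v v' ->
     pr_tm m (Active T e1 e2 v l) (Active T' e1' e2' v' l)
 | Pr_Blame m l : pr_tm m (Blame l) (Blame l)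
 | Pr_Step m a a' b : stable_step m a a' -> pr_tm m a' b -> pr_tm m a b
with pr_list : nat -> list tm -> list tm -> Prop :=
 | PrL_nil m : pr_list m [] []
 | PrL_cons m a b l l' : pr_tm m a b -> pr_list m l l' -> pr_list m (a :: l) (b :: l').

Scheme pr_ty_mut := Induction for pr_ty Sort Prop
with pr_val_mut := Induction for pr_val Sort Prop
with pr_tm_mut := Induction for pr_tm Sort Prop
with pr_list_mut := Induction for pr_list Sort Prop.
Combined Scheme pr_mutind from pr_ty_mut, pr_val_mut, pr_tm_mut, pr_list_mut.

Lemma pr_refl :
  (forall T m, pr_ty m T T) /\ (forall v m, pr_val m v v) /\ (forall e m, pr_tm m e e).
Proof. syntax_induction; try (constructor; auto). induction H; constructor; auto. Qed.

Lemma pr_tm_refl m e : pr_tm m e e.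
Proof. apply (proj2 (proj2 pr_refl)). Qed.

Section ActionClosure.
Variable R : nat -> action -> action -> nat -> Prop.
Hypothesis R_valid : forall m s s' m', R m s s' m' -> act_valid Sg m s m'.
Hypothesis R_up_e : forall m s s' m', R m s s' m' -> R m (up_e Sg s) (up_e Sg s') m'.
Hypothesis R_up_t : forall m s s' m', R m s s' m' -> R (S m) (up_t Sg s) (up_t Sg s') (S m').
Hypothesis R_Var :
  forall m s s' m', R m s s' m' -> forall x, pr_tm m' (act_tm s (Var x)) (act_tm s' (Var x)).
Hypothesis R_TVar :
  forall m s s' m', R m s s' m' -> forall a, pr_ty m' (act_ty s (TVar a)) (act_ty s' (TVar a)).

Lemma pr_act :
  (forall m T T', pr_ty m T T' ->
     forall s s' m', R m s s' m' -> pr_ty m' (act_ty s T) (act_ty s' T')) /\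
  (forall m v v', pr_val m v v' ->
     forall s s' m', R m s s' m' -> pr_val m' (act_val s v) (act_val s' v')) /\
  (forall m e e', pr_tm m e e' ->
     forall s s' m', R m s s' m' -> pr_tm m' (act_tm s e) (act_tm s' e')) /\
  (forall m l l', pr_list m l l' ->
     forall s s' m', R m s s' m' -> pr_list m' (map (act_tm s) l) (map (act_tm s') l')).
Proof.
  apply pr_mutind; intros; autorewrite with act_simpl; try solve [constructor; eauto]; eauto.
  eapply Pr_Step; [eapply stable_step_act; eauto | eauto].
Qed.

End ActionClosure.

Inductive lift_pair : nat -> action -> action -> nat -> Prop :=
 | LP_E m c : lift_pair m (ALiftE c) (ALiftE c) m
 | LP_T m c : c <= m -> lift_pair m (ALiftT c) (ALiftT c) (S m).

Lemma pr_lift :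
  (forall m T T', pr_ty m T T' ->
     forall s s' m', lift_pair m s s' m' -> pr_ty m' (act_ty s T) (act_ty s' T')) /\
  (forall m v v', pr_val m v v' ->
     forall s s' m', lift_pair m s s' m' -> pr_val m' (act_val s v) (act_val s' v')) /\
  (forall m e e', pr_tm m e e' ->
     forall s s' m', lift_pair m s s' m' -> pr_tm m' (act_tm s e) (act_tm s' e')) /\
  (forall m l l', pr_list m l l' ->
     forall s s' m', lift_pair m s s' m' -> pr_list m' (map (act_tm s) l) (map (act_tm s') l')).
Proof.
  apply pr_act; destruct 1; simpl; try constructor; auto; lia.
Qed.

Lemma pr_ty_lift_e c m T T' : pr_ty m T T' -> pr_ty m (lift_e_ty Sg c T) (lift_e_ty Sg c T').
Proof. intros H; exact (proj1 pr_lift _ _ _ H _ _ _ (LP_E m c)). Qed.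

Lemma pr_val_lift_e m v v' : pr_val m v v' -> pr_val m (lift_e_val Sg 0 v) (lift_e_val Sg 0 v').
Proof. intros H; exact (proj1 (proj2 pr_lift) _ _ _ H _ _ _ (LP_E m 0)). Qed.

Lemma pr_tm_lift_e m e e' : pr_tm m e e' -> pr_tm m (lift_e_tm Sg 0 e) (lift_e_tm Sg 0 e').
Proof. intros H; exact (proj1 (proj2 (proj2 pr_lift)) _ _ _ H _ _ _ (LP_E m 0)). Qed.

Lemma pr_ty_lift_t m T T' : pr_ty m T T' -> pr_ty (S m) (lift_t_ty Sg 0 T) (lift_t_ty Sg 0 T').
Proof. intros H; exact (proj1 pr_lift _ _ _ H _ _ _ (LP_T m 0 (Nat.le_0_l m))). Qed.

Lemma pr_val_lift_t m v v' :
  pr_val m v v' -> pr_val (S m) (lift_t_val Sg 0 v) (lift_t_val Sg 0 v').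
Proof. intros H; exact (proj1 (proj2 pr_lift) _ _ _ H _ _ _ (LP_T m 0 (Nat.le_0_l m))). Qed.

Lemma pr_tm_lift_t m e e' : pr_tm m e e' -> pr_tm (S m) (lift_t_tm Sg 0 e) (lift_t_tm Sg 0 e').
Proof. intros H; exact (proj1 (proj2 (proj2 pr_lift)) _ _ _ H _ _ _ (LP_T m 0 (Nat.le_0_l m))). Qed.

Inductive subst_pair : nat -> action -> action -> nat -> Prop :=
 | SP_Lift m s s' m' : lift_pair m s s' m' -> subst_pair m s s' m'
 | SP_E m k u u' : pr_tm m u u' -> subst_pair m (ASubstE k u) (ASubstE k u') m
 | SP_T m k U U' : k <= m -> pr_ty m U U' -> subst_pair (S m) (ASubstT k U) (ASubstT k U') m.

Lemma pr_subst :
  (forall m T T', pr_ty m T T' ->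
     forall s s' m', subst_pair m s s' m' -> pr_ty m' (act_ty s T) (act_ty s' T')) /\
  (forall m v v', pr_val m v v' ->
     forall s s' m', subst_pair m s s' m' -> pr_val m' (act_val s v) (act_val s' v')) /\
  (forall m e e', pr_tm m e e' ->
     forall s s' m', subst_pair m s s' m' -> pr_tm m' (act_tm s e) (act_tm s' e')) /\
  (forall m l l', pr_list m l l' ->
     forall s s' m', subst_pair m s s' m' -> pr_list m' (map (act_tm s) l) (map (act_tm s') l')).
Proof.
  apply pr_act.
  - destruct 1 as [m s s' m' []| |]; simpl; auto; lia.
  - destruct 1 as [m s s' m' []| |]; simpl.
    + apply SP_Lift, LP_E.
    + apply SP_Lift, LP_T; auto.
    + apply SP_E, pr_tm_lift_e; auto.
    + apply SP_T; auto using pr_ty_lift_e.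
  - destruct 1 as [m s s' m' []| |]; simpl.
    + apply SP_Lift, LP_E.
    + apply SP_Lift, LP_T; lia.
    + apply SP_E, pr_tm_lift_t; auto.
    + apply SP_T; [lia | auto using pr_ty_lift_t].
  - destruct 1 as [m s s' m' []| |]; simpl; intros x; try constructor.
    index_arith; auto; constructor.
  - destruct 1 as [m s s' m' []| |]; simpl; intros x; try constructor.
    index_arith; auto; constructor.
Qed.

Lemma pr_ty_subst_e0 m T T' u u' : pr_ty m T T' -> pr_tm m u u' ->
  pr_ty m (subst_e_ty Sg 0 u T) (subst_e_ty Sg 0 u' T').
Proof. intros H Hu; exact (proj1 pr_subst _ _ _ H _ _ _ (SP_E m 0 u u' Hu)). Qed.

Lemma pr_tm_subst_e0 m e e' u u' : pr_tm m e e' -> pr_tm m u u' ->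
  pr_tm m (subst_e_tm Sg 0 u e) (subst_e_tm Sg 0 u' e').
Proof. intros H Hu; exact (proj1 (proj2 (proj2 pr_subst)) _ _ _ H _ _ _ (SP_E m 0 u u' Hu)). Qed.

Lemma pr_tm_subst_t0 m e e' U U' : pr_tm (S m) e e' -> pr_ty m U U' ->
  pr_tm m (subst_t_tm Sg 0 U e) (subst_t_tm Sg 0 U' e').
Proof.
  intros H Hu.
  exact (proj1 (proj2 (proj2 pr_subst)) _ _ _ H _ _ _ (SP_T m 0 U U' (Nat.le_0_l m) Hu)).
Qed.

End InnerEvaluation.

Section Cotermination.
Context (Sg : sig).
Notation tm := (tm Sg).
Notation cstep := (cstep Sg).
Notation csteps := (csteps Sg).
Notation pr_tm := (pr_tm Sg).
Notation pr_ty := (pr_ty Sg).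
Notation pr_val := (pr_val Sg).
Notation pr_list := (pr_list Sg).

(* [pr_tm] without a step at the root. *)
Definition pr_cong m (a b : tm) : Prop :=
  match a, b with
  | Val v, Val v' => pr_val m v v'
  | Var x, Var y => x = y
  | Op o es, Op o' es' => o = o' /\ pr_list m es es'
  | App a1 a2, App b1 b2 => pr_tm m a1 b1 /\ pr_tm m a2 b2
  | TApp a T, TApp b T' => pr_tm m a b /\ pr_ty m T T'
  | Wait T e1 e2 l, Wait T' e1' e2' l' =>
      pr_ty m T T' /\ pr_tm m e1 e1' /\ pr_tm m e2 e2' /\ l = l'
  | Active T e1 e2 v l, Active T' e1' e2' v' l' =>
      pr_ty m T T' /\ pr_tm m e1 e1' /\ pr_tm m e2 e2' /\ pr_val m v v' /\ l = l'
  | Blame l, Blame l' => l = l'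
  | _, _ => False
  end.

Lemma pr_tm_cases m a b :
  pr_tm m a b -> (exists a', stable_step Sg m a a' /\ pr_tm m a' b) \/ pr_cong m a b.
Proof. destruct 1; simpl; eauto 10. Qed.

Lemma pr_tm_unstep a b : pr_tm 0 a b -> exists a1, csteps a a1 /\ pr_cong 0 a1 b.
Proof.
  induction 1; try solve [eexists; split; [apply csteps_refl | simpl; eauto 10]].
  destruct IHpr_tm as [a1 [? ?]]. exists a1; split; auto.
  econstructor; eauto. eapply stable_step_cstep; eauto.
Qed.

Lemma pr_tm_Val_l m v y : pr_tm m (Val v) y -> exists v', y = Val v' /\ pr_val m v v'.
Proof.
  intros H; destruct (pr_tm_cases _ _ _ H) as [[a' [Hs _]]|Hc].
  - exfalso; eapply cstep_val; eapply stable_step_cstep; eauto.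
  - destruct y; simpl in Hc; try contradiction; eauto.
Qed.

Lemma pr_tm_Blame_l m l y : pr_tm m (Blame l) y -> y = Blame l.
Proof.
  intros H; destruct (pr_tm_cases _ _ _ H) as [[a' [Hs _]]|Hc].
  - exfalso; eapply cstep_blame; eapply stable_step_cstep; eauto.
  - destruct y; simpl in Hc; try contradiction; subst; auto.
Qed.

Lemma pr_tm_Val_r x v' : pr_tm 0 x (Val v') -> exists v, csteps x (Val v) /\ pr_val 0 v v'.
Proof.
  intros H; destruct (pr_tm_unstep _ _ H) as [a1 [Hs Hc]].
  destruct a1; simpl in Hc; try contradiction; eauto.
Qed.

Lemma pr_tm_Blame_r x l : pr_tm 0 x (Blame l) -> csteps x (Blame l).
Proof.
  intros H; destruct (pr_tm_unstep _ _ H) as [a1 [Hs Hc]].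
  destruct a1; simpl in Hc; try contradiction; subst; auto.
Qed.

Lemma pr_list_app m l1 l1' l2 l2' :
  pr_list m l1 l1' -> pr_list m l2 l2' -> pr_list m (l1 ++ l2) (l1' ++ l2').
Proof. induction 1; simpl; intros; auto; constructor; auto. Qed.

Lemma pr_list_vals m vs vs' : Forall2 (pr_val m) vs vs' -> pr_list m (map Val vs) (map Val vs').
Proof. induction 1; simpl; constructor; auto; constructor; auto. Qed.

Lemma pr_list_split_l m vs e es bs : pr_list m (map Val vs ++ e :: es) bs ->
  exists vs' b bs2, bs = map Val vs' ++ b :: bs2 /\
    Forall2 (pr_val m) vs vs' /\ pr_tm m e b /\ pr_list m es bs2.
Proof.
  revert bs; induction vs as [|v vs IH]; simpl; intros bs H; inversion H; subst.
  - exists [], b, l'; simpl; auto.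
  - match goal with Hh : pr_tm _ (Val _) _ |- _ =>
      destruct (pr_tm_Val_l _ _ _ Hh) as [v' [-> ?]] end.
    match goal with Hh : pr_list _ (map Val _ ++ _) _ |- _ =>
      destruct (IH _ Hh) as [vs' [b' [bs2 [-> [? [? ?]]]]]] end.
    exists (v' :: vs'), b', bs2; simpl; auto.
Qed.

Lemma pr_list_split_r m xs vs' b bs : pr_list m xs (map Val vs' ++ b :: bs) ->
  exists xs1 x xs2, xs = xs1 ++ x :: xs2 /\
    pr_list m xs1 (map Val vs') /\ pr_tm m x b /\ pr_list m xs2 bs.
Proof.
  revert xs; induction vs' as [|v vs' IH]; simpl; intros xs H; inversion H; subst.
  - exists [], a, l; simpl; repeat split; auto; constructor.
  - match goal with Hh : pr_list _ _ (map Val _ ++ _) |- _ =>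
      destruct (IH _ Hh) as [xs1 [x [xs2 [-> [? [? ?]]]]]] end.
    exists (a :: xs1), x, xs2; simpl; repeat split; auto; constructor; auto.
Qed.

Lemma pr_list_consts_l m (ks : list (sK Sg)) l :
  pr_list m (map (const Sg) ks) l -> l = map (const Sg) ks.
Proof.
  revert l; induction ks; simpl; intros l H; inversion H; subst; auto.
  unfold const in *. match goal with Hh : pr_tm _ (Val _) _ |- _ =>
    destruct (pr_tm_Val_l _ _ _ Hh) as [v' [-> Hv]] end.
  inversion Hv; subst. f_equal; auto.
Qed.

Lemma pr_list_vals_r xs vs' : pr_list 0 xs (map Val vs') -> forall o pre rest,
  exists vs, Forall2 (pr_val 0) vs vs' /\
    csteps (Op o (map Val pre ++ xs ++ rest)) (Op o (map Val pre ++ map Val vs ++ rest)).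
Proof.
  revert xs; induction vs' as [|v' vs' IH]; simpl; intros xs H o pre rest; inversion H; subst.
  - exists []; simpl; split; [constructor | apply csteps_refl].
  - match goal with Hh : pr_tm _ _ (Val _) |- _ => destruct (pr_tm_Val_r _ _ Hh) as [v [Hs Hv]] end.
    match goal with Hh : pr_list _ _ (map Val _) |- _ =>
      destruct (IH _ Hh o (pre ++ [v]) rest) as [vs [HF Hs2]] end.
    exists (v :: vs); split; [constructor; auto|].
    eapply csteps_trans; [simpl; apply csteps_Op; exact Hs|].
    rewrite map_app in Hs2; simpl in Hs2. rewrite <- !app_assoc in Hs2. exact Hs2.
Qed.

Lemma Forall2_pr_val_consts m vs (ks : list (sK Sg)) :
  Forall2 (pr_val m) vs (map (@VConst Sg) ks) -> vs = map (@VConst Sg) ks.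
Proof.
  revert vs; induction ks; simpl; intros vs H; inversion H; subst; auto.
  match goal with Hh : pr_val _ _ _ |- _ => inversion Hh; subst end; f_equal; auto.
Qed.

Ltac pr_auto := repeat (first [ assumption
  | apply Pr_Val | apply Pr_App | apply Pr_Var | apply Pr_TApp | apply Pr_Wait
  | apply Pr_Active | apply Pr_Blame | apply PrV_Abs | apply PrV_TAbs | apply PrV_Cast
  | apply PrV_Const | apply PrT_Fun | apply PrT_All | apply PrT_Ref | apply PrT_Var
  | apply PrT_Base | apply pr_ty_lift_e | apply pr_val_lift_e | apply pr_val_lift_t
  | apply pr_tm_subst_e0 | apply pr_tm_subst_t0 ]).

Ltac invert_pr_l := repeat match goal with
  | H : _ /\ _ |- _ => destruct H
  | H : pr_tm _ (Val _) _ |- _ => let v' := fresh "v'" in let Hv := fresh "Hv" in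
      destruct (pr_tm_Val_l _ _ _ H) as [v' [-> Hv]]; clear H
  | H : pr_tm _ (Blame _) _ |- _ => apply pr_tm_Blame_l in H; subst
  | H : pr_val _ (VAbs _ _) _ |- _ => inversion H; subst; clear H
  | H : pr_val _ (VTAbs _) _ |- _ => inversion H; subst; clear H
  | H : pr_val _ (VCast _ _ _) _ |- _ => inversion H; subst; clear H
  | H : pr_val _ (VConst _) _ |- _ => inversion H; subst; clear H
  | H : pr_ty _ (TFun _ _) _ |- _ => inversion H; subst; clear H
  | H : pr_ty _ (TAll _) _ |- _ => inversion H; subst; clear H
  | H : pr_ty _ (TBase _) _ |- _ => inversion H; subst; clear H
  | H : pr_ty _ (TRef _ _) _ |- _ => inversion H; subst; clear H
  end.

Ltac invert_pr_r := repeat match goal with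
  | H : _ /\ _ |- _ => destruct H
  | H : pr_tm 0 _ (Val _) |- _ =>
      let v := fresh "v" in let Hs := fresh "Hs" in let Hv := fresh "Hv" in
      destruct (pr_tm_Val_r _ _ H) as [v [Hs Hv]]; clear H
  | H : pr_tm 0 _ (Blame _) |- _ => apply pr_tm_Blame_r in H
  | H : pr_val _ _ (VAbs _ _) |- _ => inversion H; subst; clear H
  | H : pr_val _ _ (VTAbs _) |- _ => inversion H; subst; clear H
  | H : pr_val _ _ (VCast _ _ _) |- _ => inversion H; subst; clear H
  | H : pr_val _ _ (VConst _) |- _ => inversion H; subst; clear H
  | H : pr_ty _ _ (TFun _ _) |- _ => inversion H; subst; clear H
  | H : pr_ty _ _ (TAll _) |- _ => inversion H; subst; clear H
  | H : pr_ty _ _ (TBase _) |- _ => inversion H; subst; clear H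
  | H : pr_ty _ _ (TRef _ _) |- _ => inversion H; subst; clear H
  end.

Lemma pr_ty_refinement m A B : pr_ty m A B -> (is_refinement Sg A <-> is_refinement Sg B).
Proof. destruct 1; simpl; tauto. Qed.

Lemma pr_cong_red_l a a' b :
  red Sg a a' -> pr_cong 0 a b -> exists b', csteps b b' /\ pr_tm 0 a' b'.
Proof.
  destruct 1; destruct b; simpl; intros Hc; try contradiction;
    try (unfold ttrue, tfalse in * ); invert_pr_l; subst.
  { match goal with Hh : pr_list _ (map (const Sg) _) _ |- _ =>
      apply pr_list_consts_l in Hh; subst end.
    eexists; split; [apply csteps_one, CS_Red; constructor; eauto | apply pr_tm_refl]. }
  all: unfold const in *; invert_pr_l;
    eexists; split; [apply csteps_one, CS_Red; constructor | pr_auto].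
  match goal with Hp : pr_ty _ ?A ?B, Hn : ~ is_refinement Sg ?A |- ~ is_refinement Sg ?B =>
    rewrite <- (pr_ty_refinement _ _ _ Hp); exact Hn end.
Qed.

Lemma pr_cong_red_r a b b' :
  red Sg b b' -> pr_cong 0 a b -> exists a', csteps a a' /\ pr_tm 0 a' b'.
Proof.
  destruct 1; destruct a; simpl; intros Hc; try contradiction;
    try (unfold ttrue, tfalse in * ); invert_pr_r; subst.
  { replace (map (const Sg) ks) with (map Val (map (@VConst Sg) ks)) in *
      by (rewrite map_map; reflexivity).
    match goal with Hh : pr_list _ _ _ |- _ =>
      destruct (pr_list_vals_r _ _ Hh o [] []) as [vs [HF Hs]] end.
    apply Forall2_pr_val_consts in HF; subst. rewrite !app_nil_r in Hs; simpl in Hs.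
    exists (const Sg k); split; [|apply pr_tm_refl].
    eapply csteps_trans; [exact Hs|].
    apply csteps_one, CS_Red. rewrite map_map. constructor; auto. }
  all: unfold const in *; invert_pr_r;
    eexists; split; [csteps_chain; apply csteps_one, CS_Red; constructor | pr_auto].
  match goal with Hp : pr_ty _ ?A ?B, Hn : ~ is_refinement Sg ?B |- ~ is_refinement Sg ?A =>
    rewrite (pr_ty_refinement _ _ _ Hp); exact Hn end.
Qed.

Ltac simulate_subterm_r := match goal with
  | IH : forall a, pr_tm 0 a ?y -> _, Hh : pr_tm 0 _ ?y |- _ =>
      let a' := fresh "a'" in destruct (IH _ Hh) as [a' [? ?]]
  end.

Lemma pr_tm_cstep_r b b' : cstep b b' ->
  forall a, pr_tm 0 a b -> exists a', csteps a a' /\ pr_tm 0 a' b'.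
Proof.
  induction 1; intros a HP; destruct (pr_tm_unstep _ _ HP) as [a1 [Hs1 Hc]]; clear HP.
  { destruct (pr_cong_red_r _ _ _ H Hc) as [a' [Hs2 HP']].
    exists a'; split; [eapply csteps_trans; eauto | auto]. }
  all: destruct a1; simpl in Hc; try contradiction; invert_pr_r; subst.
  all: try solve [simulate_subterm_r; eexists; split; [csteps_chain; apply csteps_refl | pr_auto]].
  all: try solve [eexists; split; [csteps_chain; apply csteps_one; blame_step | pr_auto]].
  all: match goal with Hh : pr_list _ _ _ |- _ =>
         destruct (pr_list_split_r _ _ _ _ _ Hh) as [xs1 [x [xs2 [-> [Hxs1 [? ?]]]]]] end;
    destruct (pr_list_vals_r _ _ Hxs1 o [] (x :: xs2)) as [vs0 [HF Hs2]]; simpl in Hs2.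
  - simulate_subterm_r. exists (Op o (map Val vs0 ++ a' :: xs2)); split.
    + eapply csteps_trans; [exact Hs1|]. eapply csteps_trans; [exact Hs2|].
      apply csteps_Op; auto.
    + apply Pr_Op, pr_list_app; [apply pr_list_vals; auto | constructor; auto].
  - invert_pr_r. exists (Blame l); split; [|constructor].
    eapply csteps_trans; [exact Hs1|]. eapply csteps_trans; [exact Hs2|].
    eapply csteps_trans; [apply csteps_Op; eassumption|]. apply csteps_one; blame_step.
Qed.

Section Deterministic.
Hypothesis true_neq_false : strue Sg <> sfalse Sg.

Lemma pr_tm_stable_step_l a a' a0 b : cstep a a' -> stable_step Sg 0 a a0 -> pr_tm 0 a0 b ->
  exists b', csteps b b' /\ pr_tm 0 a' b'.
Proof.
  intros Hst Hs HP; exists b; split; [apply csteps_refl|].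
  replace a' with a0; [exact HP|].
  eapply cstep_deterministic; eauto using stable_step_cstep.
Qed.

Ltac simulate_subterm := match goal with
  | IH : cstep ?x _ -> forall b, pr_tm 0 ?x b -> _, Hx : cstep ?x _, Hh : pr_tm 0 ?x _ |- _ =>
      let b' := fresh "b'" in destruct (IH Hx _ Hh) as [b' [? ?]]
  end.

Lemma pr_tm_cstep_l a a' : cstep a a' ->
  forall b, pr_tm 0 a b -> exists b', csteps b b' /\ pr_tm 0 a' b'.
Proof.
  intros Hst; generalize Hst; induction Hst; intros Hst0 b HP;
    destruct (pr_tm_cases _ _ _ HP) as [[a0 [Hs HP0]]|Hc];
    try solve [eapply pr_tm_stable_step_l; eauto].
  { eapply pr_cong_red_l; eauto. }
  all: destruct b; simpl in Hc; try contradiction; invert_pr_l; subst.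
  all: try solve [simulate_subterm; eexists; split; [csteps_chain; apply csteps_refl | pr_auto]].
  all: try solve [eexists; split; [apply csteps_one; blame_step | pr_auto]].
  all: match goal with Hh : pr_list _ _ _ |- _ =>
         destruct (pr_list_split_l _ _ _ _ _ Hh) as [vs' [b [bs2 [-> [? [? ?]]]]]] end.
  - simulate_subterm. exists (Op o0 (map Val vs' ++ b' :: bs2)); split.
    + apply csteps_Op; auto.
    + apply Pr_Op, pr_list_app; [apply pr_list_vals; auto | constructor; auto].
  - invert_pr_l. eexists; split; [apply csteps_one; blame_step | pr_auto].
Qed.

Lemma pr_tm_true_l a b : csteps a (ttrue Sg) -> pr_tm 0 a b -> csteps b (ttrue Sg).
Proof.
  intros H; remember (ttrue Sg) as t; revert b; induction H; intros b HP; subst.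
  - unfold ttrue, const in *. destruct (pr_tm_Val_l _ _ _ HP) as [v' [-> Hv]].
    inversion Hv; subst; apply csteps_refl.
  - destruct (pr_tm_cstep_l _ _ H _ HP) as [b' [? ?]]. eapply csteps_trans; eauto.
Qed.

Lemma pr_tm_true_r a b : csteps b (ttrue Sg) -> pr_tm 0 a b -> csteps a (ttrue Sg).
Proof.
  intros H; remember (ttrue Sg) as t; revert a; induction H; intros a HP; subst.
  - unfold ttrue, const in *. destruct (pr_tm_Val_r _ _ HP) as [v [Hs Hv]].
    inversion Hv; subst; auto.
  - destruct (pr_tm_cstep_r _ _ H _ HP) as [a' [? ?]]. eapply csteps_trans; eauto.
Qed.

End Deterministic.

End Cotermination.

Section Contexts.
Context (Sg : sig).
Notation tm := (tm Sg).
Notation cstep := (cstep Sg).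
Notation csteps := (csteps Sg).
Notation step := (step Sg).
Notation multistep := (multistep Sg).
Notation plug := (plug Sg).

Fixpoint ectx_comp (F E : ectx Sg) : ectx Sg :=
  match F with
  | EHole _ => E
  | EOp _ o vs F' es => EOp Sg o vs (ectx_comp F' E) es
  | EApp1 _ F' e => EApp1 Sg (ectx_comp F' E) e
  | EApp2 _ v F' => EApp2 Sg v (ectx_comp F' E)
  | ETApp _ F' T => ETApp Sg (ectx_comp F' E) T
  | EWait _ T e F' l => EWait Sg T e (ectx_comp F' E) l
  | EActive _ T e F' v l => EActive Sg T e (ectx_comp F' E) v l
  end.

Lemma plug_comp F E e : plug (ectx_comp F E) e = plug F (plug E e).
Proof. induction F; simpl; congruence. Qed.

Lemma ectx_comp_hole F E : ectx_comp F E = EHole Sg -> E = EHole Sg.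
Proof. destruct F; simpl; intros H; try discriminate; auto. Qed.

Lemma step_plug F e e' : step e e' -> exists z, step (plug F e) z.
Proof.
  destruct 1.
  - exists (plug F (plug E e2)). rewrite <- !plug_comp. constructor; auto.
  - exists (Blame l). rewrite <- plug_comp. constructor.
    intros Hc. apply ectx_comp_hole in Hc; auto.
Qed.

Lemma red_step r r' : red Sg r r' -> exists z, step r z.
Proof. intros H; exists r'; apply (S_Ctx Sg (EHole Sg)); auto. Qed.

Lemma plug_cstep E r r' : red Sg r r' -> cstep (plug E r) (plug E r').
Proof.
  induction E; simpl; intros;
    [ apply CS_Red | apply CS_Op | apply CS_App1 | apply CS_App2 | apply CS_TApp
    | apply CS_Wait | apply CS_Active ]; auto.
Qed.

Lemma plug_blame_csteps E l : csteps (plug E (Blame l)) (Blame l).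
Proof.
  induction E; simpl; [apply csteps_refl|..].
  all: csteps_chain; apply csteps_one; blame_step.
Qed.

Lemma step_csteps x y : step x y -> csteps x y.
Proof.
  destruct 1.
  - apply csteps_one; apply plug_cstep; auto.
  - apply plug_blame_csteps.
Qed.

Lemma multistep_csteps x y : multistep x y -> csteps x y.
Proof. induction 1; [apply csteps_refl|]. eapply csteps_trans; eauto using step_csteps. Qed.

Inductive blame_pos : tm -> label -> Prop :=
 | BP_Here l : blame_pos (Blame l) l
 | BP_App1 e1 e2 l : blame_pos e1 l -> blame_pos (App e1 e2) l
 | BP_App2 v e2 l : blame_pos e2 l -> blame_pos (App (Val v) e2) l
 | BP_TApp e T l : blame_pos e l -> blame_pos (TApp e T) l
 | BP_Wait T e1 e2 l' l : blame_pos e2 l -> blame_pos (Wait T e1 e2 l') l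
 | BP_Active T e1 e2 v l' l : blame_pos e2 l -> blame_pos (Active T e1 e2 v l') l
 | BP_Op o vs e es l : blame_pos e l -> blame_pos (Op o (map Val vs ++ e :: es)) l.

Lemma blame_pos_notval y l : blame_pos y l -> notval Sg y.
Proof. destruct 1; intros w Hw; discriminate. Qed.

Lemma cstep_plug_or_blame x y : cstep x y ->
  (exists E r r', x = plug E r /\ y = plug E r' /\ red Sg r r') \/ (exists l, blame_pos y l).
Proof.
  induction 1; try solve [right; exists l; constructor].
  { left; exists (EHole Sg), e, e'; auto. }
  all: destruct IHcstep as [[E [r [r' [-> [-> ?]]]]]|[lb ?]];
    
    [left | right; exists lb; eauto using BP_App1, BP_App2, BP_TApp, BP_Wait, BP_Active, BP_Op].
  - exists (EApp1 Sg E e2), r, r'; auto.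
  - exists (EApp2 Sg v E), r, r'; auto.
  - exists (ETApp Sg E T), r, r'; auto.
  - exists (EWait Sg T e1 E l), r, r'; auto.
  - exists (EActive Sg T e1 E v l), r, r'; auto.
  - exists (EOp Sg o vs E es), r, r'; auto.
Qed.

Ltac absurd_blame_pos := exfalso; match goal with
  | Hr : red Sg (App _ _) _ |- _ => destruct (red_App_inv _ _ _ _ Hr) as [[? ?] [? ?]]
  | Hr : red Sg (TApp _ _) _ |- _ => destruct (red_TApp_inv _ _ _ _ Hr) as [? ?]
  | Hr : red Sg (Wait _ _ _ _) _ |- _ => destruct (red_Wait_inv _ _ _ _ _ _ Hr) as [? ?]
  | Hr : red Sg (Active _ _ _ _ _) _ |- _ => destruct (red_Active_inv _ _ _ _ _ _ _ Hr) as [? ?]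
  | Hr : red Sg (Op _ _) _ |- _ => let ks := fresh "ks" in let Hks := fresh "Hks" in
      destruct (red_Op_inv _ _ _ _ Hr) as [ks Hks]; symmetry in Hks;
      destruct (map_const_app_inv _ _ _ _ _ Hks) as [? ?]; unfold const in *
  end; subst;
  match goal with Hb : blame_pos (Val _) _ |- _ =>
    eapply blame_pos_notval; [exact Hb | reflexivity] end.

Lemma blame_pos_cstep x l z : blame_pos x l -> cstep x z -> blame_pos z l.
Proof.
  intros Hb; revert z; induction Hb; intros z H; inversion H; subst;
    try solve [absurd_blame_pos];
    try solve [exfalso; eapply cstep_blame; eauto];
    try solve [match goal with Hb : blame_pos (Val _) _ |- _ =>
                 exfalso; eapply blame_pos_notval; [exact Hb | reflexivity] end];
    try solve [match goal with Hc : cstep (Val _) _ |- _ =>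
                 exfalso; eapply cstep_val; exact Hc end];
    try solve [match goal with Hc : blame_pos (Blame _) _ |- _ =>
                 inversion Hc; subst; constructor end];
    try solve [constructor; auto].
  - match goal with Hq : map Val _ ++ _ :: _ = map Val _ ++ _ :: _ |- _ =>
      destruct (map_Val_app_inj _ _ _ _ _ _ _ Hq) as [? [? ?]] end;
      [eapply cstep_notval; eauto | eapply blame_pos_notval; eauto | subst].
    apply BP_Op; auto.
  - match goal with Hq : map Val _ ++ _ :: _ = map Val _ ++ _ :: _ |- _ =>
      destruct (map_Val_app_inj _ _ _ _ _ _ _ Hq) as [? [? ?]] end;
      [intros ? ?; discriminate | eapply blame_pos_notval; eauto | subst].
    inversion Hb; subst; constructor.
Qed.

Lemma blame_pos_csteps_val y v l : csteps y (Val v) -> blame_pos y l -> False.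
Proof.
  intros H; remember (Val v) as t; induction H; intros Hb; subst.
  - eapply blame_pos_notval; eauto.
  - apply IHclos_refl_trans_1n; auto. eapply blame_pos_cstep; eauto.
Qed.

(* [cstep] propagates blame one frame at a time, which [step] cannot mimic;
   but a term with blame in evaluation position never reaches a value. *)
Lemma csteps_multistep x v : csteps x (Val v) -> multistep x (Val v).
Proof.
  intros H; remember (Val v) as t; induction H; subst; [constructor|].
  destruct (cstep_plug_or_blame _ _ H) as [[E [r [r' [-> [-> ?]]]]]|[l Hb]].
  - econstructor; [constructor; eauto | apply IHclos_refl_trans_1n; auto].
  - exfalso; eapply blame_pos_csteps_val; eauto.
Qed.

End Contexts.

(** * Canonical forms *)

Section Refinements.
Context (Sg : sig).
Hypothesis true_neq_false : strue Sg <> sfalse Sg.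
Notation ty := (ty Sg).
Notation val := (val Sg).
Notation cstep := (cstep Sg).
Notation csteps := (csteps Sg).

Fixpoint sat_refinements (T : ty) (w : val) : Prop :=
  match T with
  | TBase _ => True
  | TRef T' p => sat_refinements T' w /\ csteps (subst_e_tm Sg 0 (Val w) p) (ttrue Sg)
  | _ => False
  end.

Lemma csteps_Val_inv v y : csteps (Val v) y -> y = Val v.
Proof. inversion 1; subst; auto. exfalso; eapply cstep_val; eauto. Qed.

Lemma csteps_Blame_Val l v : csteps (Blame l) (Val v) -> False.
Proof. inversion 1; subst. eapply cstep_blame; eauto. Qed.

Lemma csteps_Val_first_step x y v : cstep x y -> csteps x (Val v) -> csteps y (Val v).
Proof.
  intros Hxy Hxv; inversion Hxv as [Hx | z Hz Hxz Hzv]; subst.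
  - exfalso; eapply cstep_val; eauto.
  - rewrite (cstep_deterministic Sg true_neq_false _ _ _ Hxy Hxz); auto.
Qed.

Lemma csteps_Wait_Val_inv T p x l u : csteps (Wait T p x l) (Val u) ->
  exists w, csteps x (Val w) /\ csteps (Wait T p (Val w) l) (Val u).
Proof.
  intros H; remember (Wait T p x l) as t; remember (Val u) as z; revert x Heqt.
  induction H; intros x0 Heq; subst; [discriminate|].
  inversion H; subst.
  - match goal with Hr : red Sg _ _ |- _ => destruct (red_Wait_inv _ _ _ _ _ _ Hr) as [w ->] end.
    exists w; split; [apply csteps_refl | econstructor; eauto].
  - destruct (IHclos_refl_trans_1n eq_refl _ eq_refl) as [w [? ?]].
    exists w; split; [econstructor; eauto | auto].
  - exfalso; eapply csteps_Blame_Val; eauto.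
Qed.

Lemma csteps_Active_Val_inv T p x v l u : csteps (Active T p x v l) (Val u) ->
  exists w, csteps x (Val w) /\ csteps (Active T p (Val w) v l) (Val u).
Proof.
  intros H; remember (Active T p x v l) as t; remember (Val u) as z; revert x Heqt.
  induction H; intros x0 Heq; subst; [discriminate|].
  inversion H; subst.
  - match goal with Hr : red Sg _ _ |- _ =>
      destruct (red_Active_inv _ _ _ _ _ _ _ Hr) as [w ->] end.
    exists w; split; [apply csteps_refl | econstructor; eauto].
  - destruct (IHclos_refl_trans_1n eq_refl _ eq_refl) as [w [? ?]].
    exists w; split; [econstructor; eauto | auto].
  - exfalso; eapply csteps_Blame_Val; eauto.
Qed.

Lemma csteps_Active_Val_done T p b w l u :
  csteps (Active T p (Val b) w l) (Val u) -> Val b = ttrue Sg /\ u = w.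
Proof.
  inversion 1 as [Heq | z Heq Hstep Hz]; subst.
  inversion Hstep; subst.
  - match goal with Hr : red Sg _ _ |- _ => inversion Hr; subst end.
    + apply csteps_Val_inv in Hz. inversion Hz; auto.
    + exfalso; eapply csteps_Blame_Val; eauto.
  - exfalso; eapply cstep_val; eauto.
Qed.

Lemma cast_sat_refinements_inv T : forall b w u l, unref Sg T = TBase b ->
  csteps (App (Val (VCast (TBase b) T l)) (Val w)) (Val u) -> u = w /\ sat_refinements T w.
Proof.
  induction T; simpl; intros b0 w u l Hu Hs; try discriminate.
  - inversion Hu; subst.
    apply (csteps_Val_first_step _ (Val w)) in Hs; [|apply CS_Red; constructor].
    apply csteps_Val_inv in Hs. inversion Hs; auto.
  - apply (csteps_Val_first_step _ (Wait T e (App (Val (VCast (TBase b0) T l)) (Val w)) l))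
      in Hs; [|apply CS_Red; constructor; simpl; auto].
    destruct (csteps_Wait_Val_inv _ _ _ _ _ Hs) as [w' [Hs1 Hs2]].
    destruct (IHT _ _ _ _ Hu Hs1) as [-> Hsat].
    apply (csteps_Val_first_step _ (Active T e (subst_e_tm Sg 0 (Val w) e) w l)) in Hs2;
      [|apply CS_Red; constructor].
    destruct (csteps_Active_Val_inv _ _ _ _ _ _ Hs2) as [u' [Hs3 Hs4]].
    destruct (csteps_Active_Val_done _ _ _ _ _ _ Hs4) as [Hu' ->].
    rewrite Hu' in Hs3; auto.
Qed.

Lemma cast_sat_refinements T : forall b w l, unref Sg T = TBase b -> sat_refinements T w ->
  csteps (App (Val (VCast (TBase b) T l)) (Val w)) (Val w).
Proof.
  induction T; simpl; intros b0 w l Hu Hs; try discriminate; try contradiction.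
  - inversion Hu; subst. apply csteps_one; apply CS_Red; constructor.
  - destruct Hs as [Hs1 Hs2].
    eapply csteps_trans; [apply csteps_one; apply CS_Red; apply R_PreCheck; simpl; auto|].
    eapply csteps_trans; [apply csteps_Wait; eapply IHT; eauto|].
    eapply csteps_trans; [apply csteps_one; apply CS_Red; constructor|].
    eapply csteps_trans; [apply csteps_Active; exact Hs2|].
    apply csteps_one; apply CS_Red; constructor.
Qed.

Lemma pr_ty_unref m A B : pr_ty Sg m A B -> pr_ty Sg m (unref Sg A) (unref Sg B).
Proof. induction 1; simpl; auto; econstructor; eauto. Qed.

Lemma pr_ty_sat_refinements A B w : pr_ty Sg 0 A B -> (sat_refinements A w <-> sat_refinements B w).
Proof.
  intros H; remember 0 as m; induction H; subst; simpl; try tauto.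
  specialize (IHpr_ty eq_refl).
  assert (HP : pr_tm Sg 0 (subst_e_tm Sg 0 (Val w) e) (subst_e_tm Sg 0 (Val w) e'))
    by (apply pr_tm_subst_e0; auto; apply pr_tm_refl).
  split; intros [? ?]; split; try tauto.
  - eapply pr_tm_true_l; eauto.
  - eapply pr_tm_true_r; eauto.
Qed.

Lemma csteps_pr_tm x y : csteps x y -> pr_tm Sg 0 x y.
Proof.
  induction 1; [apply pr_tm_refl|].
  eapply Pr_Step; eauto. apply cstep_stable; auto.
Qed.

Lemma conv1_pr_ty A B : conv1 Sg A B -> pr_ty Sg 0 A B.
Proof.
  intros [T [e1 [e2 [-> [-> Hs]]]]].
  apply pr_ty_subst_e0; [apply (proj1 (pr_refl Sg)) | apply csteps_pr_tm, step_csteps; auto].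
Qed.

End Refinements.

Section CanonicalForms.
Context (Sg : sig) (Sig : tysig Sg).
Hypothesis FH : FH_assumptions Sg Sig.
Notation ty := (ty Sg).
Notation val := (val Sg).

Definition canon (v : val) (T : ty) : Prop :=
  match v with
  | VConst k => unref Sg T = TBase (kbase Sg k) /\ sat_refinements Sg T (VConst k)
  | VAbs _ _ => exists X Y, unref Sg T = TFun X Y
  | VTAbs _ => exists X, unref Sg T = TAll X
  | VCast A B l => (exists X Y, unref Sg T = TFun X Y) /\ compat Sg A B /\ wf_ty Sg Sig [] A
  end.

Lemma true_neq_false_of_assumptions : strue Sg <> sfalse Sg.
Proof. destruct FH as [_ [_ [H _]]]; auto. Qed.

Lemma canon_pr_ty v A B : pr_ty Sg 0 A B -> (canon v A <-> canon v B).
Proof.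
  intros HP. pose proof (pr_ty_unref _ _ _ _ HP) as HU.
  destruct v as [k| | |]; simpl.
  { pose proof (pr_ty_sat_refinements _ true_neq_false_of_assumptions _ _ (VConst k) HP).
    split; intros [Hu Hs]; rewrite Hu in HU; inversion HU; split; try congruence; tauto. }
  all: split; intros Hc;
    repeat match goal with H : _ /\ _ |- _ => destruct H | H : exists _, _ |- _ => destruct H end;
    match goal with Hu : unref Sg _ = _ |- _ => rewrite Hu in HU; inversion HU end; eauto.
Qed.

Lemma canon_equiv v A B : Defs.equiv Sg A B -> canon v A -> canon v B.
Proof.
  induction 1; auto.
  destruct H as [H|H]; apply conv1_pr_ty, (canon_pr_ty v) in H; tauto.
Qed.

Lemma canon_typing G e T : typing Sg Sig G e T -> G = [] -> forall v, e = Val v -> canon v T.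
Proof.
  induction 1; intros HG v0 He; try discriminate; inversion He; subst; simpl; eauto.
  - destruct FH as [_ [_ [_ [_ [Hk _]]]]]. destruct (Hk k) as [Hu [_ Hm]].
    split; auto.
    specialize (Hm 0). apply multistep_csteps in Hm.
    apply (cast_sat_refinements_inv _ true_neq_false_of_assumptions _ _ _ _ _ Hu) in Hm. tauto.
  - eapply canon_equiv; eauto.
  - specialize (IHtyping eq_refl _ eq_refl). destruct v0; simpl in *; auto; tauto.
  - specialize (IHtyping eq_refl _ eq_refl). destruct v0; simpl in *; auto.
    destruct IHtyping; split; auto. split; auto. apply multistep_csteps; auto.
Qed.

End CanonicalForms.

Section Progress.
Context (Sg : sig) (Sig : tysig Sg).
Hypothesis FH : FH_assumptions Sg Sig.
Notation tm := (tm Sg).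
Notation step := (step Sg).
Notation typing := (typing Sg Sig).

Definition progressive (e : tm) : Prop :=
  (exists e', step e e') \/ is_value Sg e \/ (exists l : label, e = Blame l).

Lemma typed_value_const_ok l v T b : typing [] (Val v) T -> unref Sg T = TBase b ->
  exists k, v = VConst k /\ const_ok Sg l T k.
Proof.
  intros Hv Hu. pose proof (canon_typing Sg Sig FH _ _ _ Hv eq_refl v eq_refl) as Hc.
  destruct v as [k| | |]; simpl in Hc; rewrite Hu in Hc;
    repeat match goal with H : _ /\ _ |- _ => destruct H | H : exists _, _ |- _ => destruct H end;
    try discriminate.
  exists k; split; [reflexivity | split; [congruence|]].
  apply csteps_multistep. rewrite Hu. apply cast_sat_refinements; auto.
Qed.

Lemma unref_subst_e T k u : unref Sg (subst_e_ty Sg k u T) = subst_e_ty Sg k u (unref Sg T).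
Proof. revert k u; induction T; simpl; auto. Qed.

Lemma op_shape_subst_e T k u : op_shape Sg T -> op_shape Sg (subst_e_ty Sg k u T).
Proof.
  revert k u; induction T; simpl; intros k u H; auto; try (destruct H as [? Hb]; discriminate).
  all: rewrite ?unref_subst_e; repeat match goal with H : _ /\ _ |- _ => destruct H end;
    repeat split; auto; match goal with H : is_base _ _ |- _ => destruct H as [b ->] end;
    eexists; reflexivity.
Qed.

Lemma args_values_ok l vs : forall T R, args_typed Sg Sig [] T (map Val vs) R -> op_shape Sg T ->
  exists ks, vs = map (@VConst Sg) ks /\ op_args_ok Sg l T ks.
Proof.
  induction vs as [|v vs IH]; simpl; intros T R Ha Hs; [exists []; simpl; auto|].
  inversion Ha as [|? ? ? T1 T2 ? Hv Hrest]; subst. simpl in Hs. destruct Hs as [[b Hb] Hs].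
  destruct (typed_value_const_ok l _ _ _ Hv Hb) as [k [-> Hk]].
  destruct (IH _ _ Hrest) as [ks [-> Hok]]; [apply op_shape_subst_e; auto|].
  exists (k :: ks); simpl; auto.
Qed.

Lemma progressive_split es : Forall progressive es -> (exists vs, es = map Val vs) \/
  (exists vs e es', es = map Val vs ++ e :: es' /\
     ((exists e', step e e') \/ (exists l, e = Blame l))).
Proof.
  induction 1; [left; exists []; auto|].
  destruct H as [[e' He]|[[v ->]|[lb ->]]].
  - right; exists [], x, l; simpl; eauto.
  - destruct IHForall as [[vs ->]|[vs [e [es' [-> Hp]]]]].
    + left; exists (v :: vs); auto.
    + right; exists (v :: vs), e, es'; simpl; auto.
  - right; exists [], (Blame lb), l; simpl; eauto.
Qed.

Lemma progressive_plug F e : F <> EHole Sg ->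
  (exists e', step e e') \/ (exists l, e = Blame l) -> progressive (plug Sg F e).
Proof.
  intros HF [[e' He]|[l ->]]; left.
  - eapply step_plug; eauto.
  - exists (Blame l); constructor; auto.
Qed.

Lemma cast_reducible A B l v : compat Sg A B -> wf_ty Sg Sig [] A ->
  exists z, red Sg (App (Val (VCast A B l)) (Val v)) z.
Proof.
  intros Hc Hw.
  destruct A as [b|a|A1 A2|A|A e]; [| | | |eexists; apply R_Forget].
  all: destruct B as [b'|a'|B1 B2|B|B e']; try (eexists; apply R_PreCheck; simpl; tauto).
  all: inversion Hc; subst; try (eexists; constructor).
  (* [<α => α>] has no rule, but the source of a closed cast is no variable. *)
  inversion Hw; subst; simpl in *; contradiction.
Qed.

Lemma progress_Op o es R : length es = arity Sg (ty_op Sig o) ->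
  args_typed Sg Sig [] (ty_op Sig o) es R -> Forall progressive es -> progressive (Op o es).
Proof.
  intros Hlen Ha Hes.
  destruct (progressive_split _ Hes) as [[vs ->]|[vs [e [es' [-> He]]]]].
  - destruct FH as [_ [_ [_ [_ [_ Hop]]]]]. destruct (Hop o) as [Hsh Hden].
    destruct (args_values_ok 0 _ _ _ Ha Hsh) as [ks [-> Hok]].
    rewrite !length_map in Hlen.
    destruct (proj1 (Hden 0 ks Hlen) Hok) as [k [Hk _]].
    left. rewrite map_map. apply (red_step _ _ _ (R_Op Sg o ks k Hk)).
  - apply (progressive_plug (EOp Sg o vs (EHole Sg) es')); [discriminate | tauto].
Qed.

Ltac by_frame F := apply (progressive_plug F); [discriminate | tauto].

Lemma progress_App e1 e2 T1 T2 : typing [] e1 (TFun T1 T2) ->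
  progressive e1 -> progressive e2 -> progressive (App e1 e2).
Proof.
  intros Ht [He1|[[v1 ->]|He1]] He2; [by_frame (EApp1 Sg (EHole Sg) e2)| |
    by_frame (EApp1 Sg (EHole Sg) e2)].
  destruct He2 as [He2|[[v2 ->]|He2]]; [by_frame (EApp2 Sg v1 (EHole Sg))| |
    by_frame (EApp2 Sg v1 (EHole Sg))].
  left. pose proof (canon_typing Sg Sig FH _ _ _ Ht eq_refl v1 eq_refl) as Hc.
  destruct v1 as [k|A e|e|A B l]; simpl in Hc.
  - destruct Hc as [Hu _]; discriminate.
  - eapply red_step. constructor.
  - destruct Hc as [X Hu]; discriminate.
  - destruct Hc as [_ [Hcompat Hwf]].
    destruct (cast_reducible _ _ l v2 Hcompat Hwf) as [z Hz]. eapply red_step; eauto.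
Qed.

Lemma progress_TApp e T1 T2 : typing [] e (TAll T1) -> progressive e -> progressive (TApp e T2).
Proof.
  intros Ht [He|[[v ->]|He]]; [by_frame (ETApp Sg (EHole Sg) T2)| |
    by_frame (ETApp Sg (EHole Sg) T2)].
  left. pose proof (canon_typing Sg Sig FH _ _ _ Ht eq_refl v eq_refl) as Hc.
  destruct v; simpl in Hc.
  - destruct Hc as [Hu _]; discriminate.
  - destruct Hc as [X [Y Hu]]; discriminate.
  - eapply red_step. constructor.
  - destruct Hc as [[X [Y Hu]] _]; discriminate.
Qed.

Lemma progress_Wait T e1 e2 l : progressive e2 -> progressive (Wait T e1 e2 l).
Proof.
  intros [He|[[v ->]|He]]; [by_frame (EWait Sg T e1 (EHole Sg) l)| |
    by_frame (EWait Sg T e1 (EHole Sg) l)].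
  left. eapply red_step. constructor.
Qed.

Lemma progress_Active T e1 e2 v l : typing [] e2 (TBool Sg) ->
  progressive e2 -> progressive (Active T e1 e2 v l).
Proof.
  intros Ht [He|[[v2 ->]|He]]; [by_frame (EActive Sg T e1 (EHole Sg) v l)| |
    by_frame (EActive Sg T e1 (EHole Sg) v l)].
  left. destruct (typed_value_const_ok 0 _ _ _ Ht eq_refl) as [k [-> [Hk _]]].
  destruct FH as [_ [_ [_ [Hbool _]]]]. inversion Hk as [Hkb].
  destruct (Hbool k (eq_sym Hkb)) as [-> | ->]; eapply red_step; constructor.
Qed.

End Progress.

Scheme typing_mut := Induction for typing Sort Prop
with args_typed_mut := Induction for args_typed Sort Prop.

Theorem mainTheorem7 (Sg : sig) (Sig : tysig Sg) :
  FH_assumptions Sg Sig ->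
  forall (e : tm Sg) (T : ty Sg),
    typing Sg Sig nil e T ->
    (exists e', step Sg e e') \/ is_value Sg e \/ (exists l : label, e = Blame l).
Proof.
  intros FH e T H.
  enough (Hprog : forall G e T, typing Sg Sig G e T -> G = [] -> progressive Sg e)
    by exact (Hprog _ _ _ H eq_refl).
  apply (typing_mut Sg Sig (fun G e _ _ => G = [] -> progressive Sg e)
                           (fun G _ es _ _ => G = [] -> Forall (progressive Sg) es));
    intros; subst; try solve [right; left; eexists; eauto].
  - discriminate.
  - eapply progress_Op; eauto.
  - eapply progress_App; eauto.
  - eapply progress_TApp; eauto.
  - apply progress_Wait; auto.
  - eapply progress_Active; eauto.
  - right; right; eauto.
  - auto.
  - constructor.
  - constructor; auto.
Qed.
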